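(* The theory $T_0^+$ has a complete model completion $T^\ast$; $T^\ast$ admits elimination of quantifiers and is $\aleph_0$-categorical, and in $T^\ast$ the definable closure and the algebraic closure coincide.
   Context: The language consists of unary predicates $Q_0,Q_1,Q_2$ and function symbols $F_0$ (one-place), $F_1$ (two-place), $F_2,F_3$ (one-place). $T_0^+$ is the theory saying: $Q_0,Q_1,Q_2$ partition the universe; $F_0$ is a (total) function from $Q_1$ to $Q_0$; $F_1$ is a (total) function from $Q_2\times Q_0$ to $Q_1$; $F_2$ is a (total) function from $Q_0$ to $Q_2$; $F_3$ is a (total) function from $Q_2$ to $Q_0$; $F_0(F_1(z,x))=x$ for all $z\in Q_2$, $x\in Q_0$; and $F_3(F_2(x))=x$ for all $x\in Q_0$. The definable closure $\mathrm{dcl}(A)$ is the set of elements $b$ such that $\mathrm{tp}(b,A)$ is realized only by $b$; the algebraic closure $\mathrm{acl}(A)$ is the set of $b$ such that $\mathrm{tp}(b,A)$ has finitely many realizations (in a monster model). *)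

(* Many-sorted first-order logic for the language of T_0^+.
   The partition Q0,Q1,Q2 is rendered by three sorts. *)
From Stdlib Require Import List Bool Arith.

Set Implicit Arguments.

Inductive sort : Type := S0 | S1 | S2.

Definition sort_eq_dec (s t : sort) : {s = t} + {s <> t}.
Proof. decide equality. Defined.

Definition sort_eqb (s t : sort) : bool :=
  if sort_eq_dec s t then true else false.

Inductive term : sort -> Type :=
| tvar : forall s : sort, nat -> term s
| tF0 : term S1 -> term S0
| tF1 : term S2 -> term S0 -> term S1
| tF2 : term S0 -> term S2
| tF3 : term S2 -> term S0.

Inductive form : Type :=
| fEq : forall s : sort, term s -> term s -> form
| fFalse : form
| fNot : form -> form
| fAnd : form -> form -> form
| fOr : form -> form -> form
| fImp : form -> form -> form
| fEx : sort -> nat -> form -> form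
| fAll : sort -> nat -> form -> form.

Arguments tvar : clear implicits.
Arguments fEq {s} _ _.

Fixpoint tfree (s : sort) (n : nat) (s' : sort) (t : term s') : bool :=
  match t with
  | tvar s'' m => sort_eqb s s'' && Nat.eqb n m
  | tF0 t1 => tfree s n t1
  | tF1 t1 t2 => tfree s n t1 || tfree s n t2
  | tF2 t1 => tfree s n t1
  | tF3 t1 => tfree s n t1
  end.

Fixpoint ffree (s : sort) (n : nat) (phi : form) : bool :=
  match phi with
  | @fEq _ t1 t2 => tfree s n t1 || tfree s n t2
  | fFalse => false
  | fNot p => ffree s n p
  | fAnd p q | fOr p q | fImp p q => ffree s n p || ffree s n q
  | fEx s' m p | fAll s' m p =>
      negb (sort_eqb s s' && Nat.eqb n m) && ffree s n p
  end.

Definition sentence (phi : form) : Prop := forall s n, ffree s n phi = false.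

Fixpoint qfree (phi : form) : bool :=
  match phi with
  | @fEq _ _ _ | fFalse => true
  | fNot p => qfree p
  | fAnd p q | fOr p q | fImp p q => qfree p && qfree q
  | fEx _ _ _ | fAll _ _ _ => false
  end.

Definition theory := form -> Prop.

(* many-sorted structures; each sort is nonempty (standard convention) *)
Record structure : Type := {
  car : sort -> Type;
  inh : forall s, car s;
  fn0 : car S1 -> car S0;
  fn1 : car S2 -> car S0 -> car S1;
  fn2 : car S0 -> car S2;
  fn3 : car S2 -> car S0 }.

Definition valuation (M : structure) := forall s : sort, nat -> car M s.

Definition upd (M : structure) (v : valuation M) (s : sort) (n : nat)
  (a : car M s) : valuation M :=
  fun s' m =>
    match sort_eq_dec s s' with
    | left e => if Nat.eqb m n then eq_rect s (car M) a s' e else v s' m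
    | right _ => v s' m
    end.

Fixpoint teval (M : structure) (v : valuation M) (s : sort) (t : term s)
  : car M s :=
  match t in term s0 return car M s0 with
  | tvar s' m => v s' m
  | tF0 t1 => fn0 M (teval v t1)
  | tF1 t1 t2 => fn1 M (teval v t1) (teval v t2)
  | tF2 t1 => fn2 M (teval v t1)
  | tF3 t1 => fn3 M (teval v t1)
  end.

Fixpoint sat (M : structure) (v : valuation M) (phi : form) : Prop :=
  match phi with
  | @fEq _ t1 t2 => teval v t1 = teval v t2
  | fFalse => False
  | fNot p => ~ sat v p
  | fAnd p q => sat v p /\ sat v q
  | fOr p q => sat v p \/ sat v q
  | fImp p q => sat v p -> sat v q
  | fEx s n p => exists a : car M s, sat (upd v s n a) p
  | fAll s n p => forall a : car M s, sat (upd v s n a) p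
  end.

Definition is_model (T : theory) (M : structure) : Prop :=
  forall phi, T phi -> forall v : valuation M, sat v phi.

Definition ax_F0F1 : form :=
  fAll S2 0 (fAll S0 0
    (fEq (tF0 (tF1 (tvar S2 0) (tvar S0 0))) (tvar S0 0))).

Definition ax_F3F2 : form :=
  fAll S0 0 (fEq (tF3 (tF2 (tvar S0 0))) (tvar S0 0)).

Definition T0plus : theory := fun phi => phi = ax_F0F1 \/ phi = ax_F3F2.

Record embedding (M N : structure) : Type := {
  emap : forall s, car M s -> car N s;
  emap_inj : forall s (a b : car M s), emap s a = emap s b -> a = b;
  emap_F0 : forall a, emap S0 (fn0 M a) = fn0 N (emap S1 a);
  emap_F1 : forall a b, emap S1 (fn1 M a b) = fn1 N (emap S2 a) (emap S0 b);
  emap_F2 : forall a, emap S2 (fn2 M a) = fn2 N (emap S0 a);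
  emap_F3 : forall a, emap S0 (fn3 M a) = fn3 N (emap S2 a) }.

Definition vmap (M N : structure) (f : embedding M N) (v : valuation M)
  : valuation N := fun s m => emap f s (v s m).

Definition elementary (M N : structure) (f : embedding M N) : Prop :=
  forall (phi : form) (v : valuation M), sat v phi <-> sat (vmap f v) phi.

Definition isomorphism (M N : structure) (f : embedding M N) : Prop :=
  forall s (b : car N s), exists a, emap f s a = b.

Definition model_complete (T : theory) : Prop :=
  forall M N (f : embedding M N), is_model T M -> is_model T N -> elementary f.

(* T* is a model completion of T (Chang-Keisler): T* |- T, every model of T
   embeds in a model of T*, T* is model complete, and for every model A of T
   the theory T* u Diag(A) is complete, i.e. any two models of T* into which A
   embeds satisfy the same L(A)-sentences. *)
Definition model_completion (T Tstar : theory) : Prop :=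
  (forall M, is_model Tstar M -> is_model T M) /\
  (forall A, is_model T A -> exists M, is_model Tstar M /\ inhabited (embedding A M)) /\
  model_complete Tstar /\
  (forall A M N (f : embedding A M) (g : embedding A N),
      is_model T A -> is_model Tstar M -> is_model Tstar N ->
      forall (phi : form) (v : valuation A),
        sat (vmap f v) phi <-> sat (vmap g v) phi).

Definition complete (T : theory) : Prop :=
  (exists M, is_model T M) /\
  (forall M N, is_model T M -> is_model T N ->
     forall phi, sentence phi ->
       forall (vM : valuation M) (vN : valuation N), sat vM phi <-> sat vN phi).

Definition quantifier_elimination (T : theory) : Prop :=
  forall phi : form, exists psi : form,
    qfree psi = true /\
    (forall s n, ffree s n psi = true -> ffree s n phi = true) /\
    (forall M, is_model T M -> forall v : valuation M, sat v phi <-> sat v psi).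

Definition universe (M : structure) := { s : sort & car M s }.

Definition countably_infinite (X : Type) : Prop :=
  exists (f : nat -> X) (g : X -> nat),
    (forall n, g (f n) = n) /\ (forall x, f (g x) = x).

Definition aleph0_categorical (T : theory) : Prop :=
  (exists M, is_model T M /\ countably_infinite (universe M)) /\
  (forall M N, is_model T M -> is_model T N ->
     countably_infinite (universe M) -> countably_infinite (universe N) ->
     exists f : embedding M N, isomorphism f).

(* A parameter set A in M is given sortwise by A s : car M s -> Prop.
   phi with distinguished variable (s0,n) and parameters v from A. *)
Definition params_in (M : structure) (A : forall s, car M s -> Prop)
  (phi : form) (s0 : sort) (n : nat) (v : valuation M) : Prop :=
  forall s m, ffree s m phi = true -> ~ (s = s0 /\ m = n) -> A s (v s m).

Definition in_dcl (M : structure) (A : forall s, car M s -> Prop)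
  (s0 : sort) (b : car M s0) : Prop :=
  exists (phi : form) (n : nat) (v : valuation M),
    params_in A phi s0 n v /\
    sat (upd v s0 n b) phi /\
    (forall c : car M s0, sat (upd v s0 n c) phi -> c = b).

Definition in_acl (M : structure) (A : forall s, car M s -> Prop)
  (s0 : sort) (b : car M s0) : Prop :=
  exists (phi : form) (n : nat) (v : valuation M),
    params_in A phi s0 n v /\
    sat (upd v s0 n b) phi /\
    (exists l : list (car M s0),
       forall c : car M s0, sat (upd v s0 n c) phi -> In c l).

Definition dcl_eq_acl (T : theory) : Prop :=
  forall M, is_model T M ->
    forall (A : forall s, car M s -> Prop) (s0 : sort) (b : car M s0),
      @in_acl M A s0 b <-> @in_dcl M A s0 b.

(* In models of T0+, [F0 (F1 z x) = x] and [F3 (F2 x) = x], so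
   every term over a finite tuple equals one of finitely many normal forms
   and the quantifier-free type of a tuple is a finite diagram. Call a model
   rich if every consistent one-point extension of the qf-type of a tuple is
   realized in it, outside any finite set. Tuples with the same qf-type in
   rich models satisfy the same formulas, and richness is axiomatized by one
   sentence per pair of diagrams. Hence T*, the theory of the rich models,
   eliminates quantifiers and is model complete and complete, and a back and
   forth shows that its countable models are isomorphic. Every model of T0+
   embeds in a rich model obtained by freely adjoining new points of each
   sort with prescribed values of [F1]; starting from a one-point model this
   gives a countable model. In a rich model, an element not named by a term
   over [A] has infinitely many realizations of its type over [A], so
   acl(A) = dcl(A). *)

From Stdlib Require Import List Bool Arith Lia.
From Stdlib Require Import Classical ClassicalEpsilon FunctionalExtensionality Eqdep_dec Cantor.
Import ListNotations.
Set Implicit Arguments.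

(** * Terms, valuations and quantifier-free types *)

Lemma sort_eq_dec_refl s : sort_eq_dec s s = left eq_refl.
Proof. destruct (sort_eq_dec s s) as [e|n]; [f_equal; apply UIP_dec, sort_eq_dec | now elim n]. Qed.

Lemma sort_eqb_true_iff s t : sort_eqb s t = true <-> s = t.
Proof. unfold sort_eqb; destruct (sort_eq_dec s t); split; congruence. Qed.

Lemma sort_eqb_refl s : sort_eqb s s = true.
Proof. apply sort_eqb_true_iff; reflexivity. Qed.

Lemma var_eqb_false s n s' m : (s', m) <> (s, n) -> sort_eqb s' s && Nat.eqb m n = false.
Proof.
  intro H. destruct (sort_eqb s' s) eqn:E1, (Nat.eqb m n) eqn:E2; auto.
  apply sort_eqb_true_iff in E1; apply Nat.eqb_eq in E2; subst; congruence.
Qed.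

Lemma var_eqb_false_iff s n s' m : sort_eqb s' s && Nat.eqb m n = false <-> (s', m) <> (s, n).
Proof.
  split; [|apply var_eqb_false].
  intros H E; injection E as -> ->; rewrite sort_eqb_refl, Nat.eqb_refl in H; discriminate.
Qed.

Lemma upd_same M (v : valuation M) s n a : upd v s n a s n = a.
Proof. unfold upd. rewrite sort_eq_dec_refl, Nat.eqb_refl. reflexivity. Qed.

Lemma upd_other M (v : valuation M) s n a s' m :
  (s', m) <> (s, n) -> upd v s n a s' m = v s' m.
Proof.
  intro H. unfold upd. destruct (sort_eq_dec s s') as [e|e]; auto.
  subst. destruct (Nat.eqb_spec m n); auto. subst; congruence.
Qed.

Lemma upd_eta M (v : valuation M) s n : upd v s n (v s n) = v.
Proof.
  apply functional_extensionality_dep; intro s'; apply functional_extensionality; intro m.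
  destruct (classic ((s', m) = (s, n))) as [E|E].
  - injection E as -> ->. apply upd_same.
  - apply upd_other, E.
Qed.

Lemma tfree_tvar s n s' m : tfree s n (tvar s' m) = true <-> s = s' /\ n = m.
Proof. simpl. rewrite andb_true_iff, sort_eqb_true_iff, Nat.eqb_eq. tauto. Qed.

Lemma teval_ext M (v v' : valuation M) s (t : term s) :
  (forall s' m, tfree s' m t = true -> v s' m = v' s' m) -> teval v t = teval v' t.
Proof.
  induction t; simpl; intro H; try (f_equal; apply IHt; intros; apply H; auto; fail).
  - apply H, tfree_tvar; auto.
  - f_equal; [apply IHt1|apply IHt2]; intros; apply H; rewrite H0; auto using orb_true_r.
Qed.

Lemma sat_ext_qfree M (v v' : valuation M) phi : qfree phi = true ->
  (forall s m, ffree s m phi = true -> v s m = v' s m) -> (sat v phi <-> sat v' phi).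
Proof.
  induction phi; simpl; intros Hq H; try discriminate;
    try (apply andb_true_iff in Hq as [Hq1 Hq2];
         rewrite IHphi1, IHphi2; [tauto|..]; auto; intros; apply H; rewrite H0; auto using orb_true_r).
  - rewrite (teval_ext v v' t), (teval_ext v v' t0); [tauto| |];
      intros; apply H; rewrite H0; auto using orb_true_r.
  - tauto.
  - rewrite IHphi; tauto.
Qed.

Definition T0_axioms (M : structure) : Prop :=
  (forall z x, fn0 M (fn1 M z x) = x) /\ (forall x, fn3 M (fn2 M x) = x).

Lemma is_model_T0plus M : is_model T0plus M <-> T0_axioms M.
Proof.
  split.
  - intro H. split.
    + intros z x. exact (H ax_F0F1 (or_introl eq_refl) (fun s _ => inh M s) z x).
    + intros x. exact (H ax_F3F2 (or_intror eq_refl) (fun s _ => inh M s) x).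
  - intros [H1 H2] phi [->| ->] v; simpl; intros; unfold upd; simpl; auto.
Qed.

Definition term_over (V : list (sort * nat)) s (t : term s) : Prop :=
  forall s' m, tfree s' m t = true -> In (s', m) V.

Lemma term_over_tvar V s m : In (s, m) V -> term_over V (tvar s m).
Proof. intros H s' m' Hf. apply tfree_tvar in Hf as [-> ->]; auto. Qed.
Lemma term_over_F0 V t : term_over V t -> term_over V (tF0 t).
Proof. intros H s m Hf; apply H; auto. Qed.
Lemma term_over_F1 V t1 t2 : term_over V t1 -> term_over V t2 -> term_over V (tF1 t1 t2).
Proof. intros H1 H2 s m Hf; simpl in Hf; apply orb_true_iff in Hf as [Hf|Hf]; auto. Qed.
Lemma term_over_F2 V t : term_over V t -> term_over V (tF2 t).
Proof. intros H s m Hf; apply H; auto. Qed.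
Lemma term_over_F3 V t : term_over V t -> term_over V (tF3 t).
Proof. intros H s m Hf; apply H; auto. Qed.
Lemma term_over_F0_inv V t : term_over V (tF0 t) -> term_over V t.
Proof. intros H s m Hf; apply H; auto. Qed.
Lemma term_over_F1_inv V t1 t2 : term_over V (tF1 t1 t2) -> term_over V t1 /\ term_over V t2.
Proof. intros H; split; intros s m Hf; apply H; simpl; rewrite Hf; auto using orb_true_r. Qed.
Lemma term_over_F2_inv V t : term_over V (tF2 t) -> term_over V t.
Proof. intros H s m Hf; apply H; auto. Qed.
Lemma term_over_F3_inv V t : term_over V (tF3 t) -> term_over V t.
Proof. intros H s m Hf; apply H; auto. Qed.
Lemma term_over_incl V V' s (t : term s) : term_over V t -> incl V V' -> term_over V' t.
Proof. intros H Hi s' m Hf; auto. Qed.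

Lemma term_has_free_var s (t : term s) : exists s' m, tfree s' m t = true.
Proof.
  induction t; simpl; eauto.
  - exists s, n. apply tfree_tvar; auto.
  - destruct IHt1 as (s' & m & H). exists s', m. rewrite H; auto.
Qed.

Definition qf_agree M N (v : valuation M) (w : valuation N) V : Prop :=
  forall s (t1 t2 : term s), term_over V t1 -> term_over V t2 ->
    (teval v t1 = teval v t2 <-> teval w t1 = teval w t2).

Lemma qf_agree_sym M N (v : valuation M) (w : valuation N) V :
  qf_agree v w V -> qf_agree w v V.
Proof. intros H s t1 t2 H1 H2. rewrite (H s t1 t2 H1 H2). tauto. Qed.

Lemma qf_agree_refl M (v : valuation M) V : qf_agree v v V.
Proof. intros s t1 t2 _ _. tauto. Qed.

Lemma qf_agree_incl M N (v : valuation M) (w : valuation N) V V' :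
  qf_agree v w V' -> incl V V' -> qf_agree v w V.
Proof. intros H Hi s t1 t2 H1 H2. apply H; eapply term_over_incl; eauto. Qed.

Lemma qf_agree_ext M N (v v' : valuation M) (w w' : valuation N) V :
  qf_agree v w V -> (forall s m, In (s, m) V -> v s m = v' s m) ->
  (forall s m, In (s, m) V -> w s m = w' s m) -> qf_agree v' w' V.
Proof.
  intros H Hv Hw s t1 t2 H1 H2.
  rewrite <- (teval_ext v v' t1), <- (teval_ext v v' t2),
    <- (teval_ext w w' t1), <- (teval_ext w w' t2); auto.
Qed.

Lemma qf_agree_nil M N (v : valuation M) (w : valuation N) : qf_agree v w [].
Proof.
  intros s t1 t2 H1 _. destruct (term_has_free_var t1) as (s' & m & H). destruct (H1 _ _ H).
Qed.

Fixpoint tsubst s0 n0 (u : term s0) s (t : term s) : term s :=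
  match t in term s1 return term s1 with
  | tvar s1 m => match sort_eq_dec s0 s1 with
                 | left e => if Nat.eqb m n0 then eq_rect s0 term u s1 e else tvar s1 m
                 | right _ => tvar s1 m end
  | tF0 t1 => tF0 (tsubst n0 u t1)
  | tF1 t1 t2 => tF1 (tsubst n0 u t1) (tsubst n0 u t2)
  | tF2 t1 => tF2 (tsubst n0 u t1)
  | tF3 t1 => tF3 (tsubst n0 u t1)
  end.

Lemma teval_tsubst M (v : valuation M) s0 n0 (u : term s0) s (t : term s) :
  teval (upd v s0 n0 (teval v u)) t = teval v (tsubst n0 u t).
Proof.
  induction t; simpl; try congruence.
  unfold upd. destruct (sort_eq_dec s0 s) as [e|e]; [subst|reflexivity].
  simpl. destruct (Nat.eqb n n0); reflexivity.
Qed.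

Lemma term_over_tsubst V s0 n0 (u : term s0) s (t : term s) :
  term_over V u -> term_over ((s0, n0) :: V) t -> term_over V (tsubst n0 u t).
Proof.
  intros Hu; induction t; simpl; intro Ht.
  - assert (Hv : (s0, n0) = (s, n) \/ In (s, n) V) by (apply Ht, tfree_tvar; auto).
    destruct (sort_eq_dec s0 s) as [e|e]; [subst; simpl; destruct (Nat.eqb_spec n n0)|];
      [subst; auto| |]; apply term_over_tvar; destruct Hv as [E|E]; congruence.
  - apply term_over_F0; auto using term_over_F0_inv.
  - apply term_over_F1_inv in Ht as [? ?]; apply term_over_F1; auto.
  - apply term_over_F2; auto using term_over_F2_inv.
  - apply term_over_F3; auto using term_over_F3_inv.
Qed.

Lemma qf_agree_upd_teval M N (v : valuation M) (w : valuation N) V s n (u : term s) :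
  qf_agree v w V -> term_over V u ->
  qf_agree (upd v s n (teval v u)) (upd w s n (teval w u)) ((s, n) :: V).
Proof.
  intros H Hu s' t1 t2 H1 H2.
  rewrite !teval_tsubst. apply H; apply term_over_tsubst; auto.
Qed.

(* Modulo T0+, every term over [V] equals one of the finitely many terms in
   [nf_terms s V]: [F0 (F1 z x)] and [F3 (F2 x)] collapse to [x]. *)
Definition nf_terms0 (V : list (sort * nat)) : list (term S0) :=
  flat_map (fun p => match p with
                     | (S0, i) => [tvar S0 i]
                     | (S1, j) => [tF0 (tvar S1 j)]
                     | (S2, k) => [tF3 (tvar S2 k)] end) V.
Definition nf_terms2 V : list (term S2) :=
  flat_map (fun p => match p with (S2, k) => [tvar S2 k] | _ => [] end) V
  ++ map tF2 (nf_terms0 V).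
Definition nf_terms1 V : list (term S1) :=
  flat_map (fun p => match p with (S1, j) => [tvar S1 j] | _ => [] end) V
  ++ flat_map (fun a => map (fun b => tF1 a b) (nf_terms0 V)) (nf_terms2 V).
Definition nf_terms s V : list (term s) :=
  match s with S0 => nf_terms0 V | S1 => nf_terms1 V | S2 => nf_terms2 V end.

Definition nf_F0 (t : term S1) : term S0 :=
  match t in term s return (match s with S1 => term S0 | _ => unit end) with
  | tvar s j => match s as s0 return (match s0 with S1 => term S0 | _ => unit end) with
                | S1 => tF0 (tvar S1 j) | _ => tt end
  | tF1 _ b => b
  | _ => tt
  end.
Definition nf_F3 (t : term S2) : term S0 :=
  match t in term s return (match s with S2 => term S0 | _ => unit end) with
  | tvar s j => match s as s0 return (match s0 with S2 => term S0 | _ => unit end) with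
                | S2 => tF3 (tvar S2 j) | _ => tt end
  | tF2 c => c
  | _ => tt
  end.

Fixpoint nf s (t : term s) : term s :=
  match t in term s0 return term s0 with
  | tvar s i => tvar s i
  | tF0 t1 => nf_F0 (nf t1)
  | tF1 a b => tF1 (nf a) (nf b)
  | tF2 a => tF2 (nf a)
  | tF3 a => nf_F3 (nf a)
  end.

Section NormalForm.
Variables (M : structure) (v : valuation M).
Hypothesis HM : T0_axioms M.

Lemma teval_nf_F0 u : teval v (nf_F0 u) = fn0 M (teval v u).
Proof.
  assert (H : forall s (u : term s), match s return term s -> Prop with
            S1 => fun u => teval v (nf_F0 u) = fn0 M (teval v u) | _ => fun _ => True end u).
  { intros s u'; destruct u'; simpl; auto; [destruct s|]; simpl; auto. symmetry; apply HM. }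
  exact (H S1 u).
Qed.

Lemma teval_nf_F3 u : teval v (nf_F3 u) = fn3 M (teval v u).
Proof.
  assert (H : forall s (u : term s), match s return term s -> Prop with
            S2 => fun u => teval v (nf_F3 u) = fn3 M (teval v u) | _ => fun _ => True end u).
  { intros s u'; destruct u'; simpl; auto; [destruct s|]; simpl; auto. symmetry; apply HM. }
  exact (H S2 u).
Qed.

Lemma teval_nf s (t : term s) : teval v (nf t) = teval v t.
Proof.
  induction t; simpl; rewrite ?teval_nf_F0, ?teval_nf_F3; congruence.
Qed.
End NormalForm.

Lemma in_nf_terms0 V u : In u (nf_terms0 V) <->
  (exists i, u = tvar S0 i /\ In (S0, i) V) \/ (exists j, u = tF0 (tvar S1 j) /\ In (S1, j) V)
  \/ (exists k, u = tF3 (tvar S2 k) /\ In (S2, k) V).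
Proof.
  unfold nf_terms0; rewrite in_flat_map. split.
  - intros ((s, i) & Hi & Hu). destruct s; simpl in Hu; destruct Hu as [Hu|[]]; subst; eauto 6.
  - intros [(i & -> & Hi)|[(i & -> & Hi)|(i & -> & Hi)]]; eexists; split; eauto; simpl; auto.
Qed.

Lemma in_nf_terms2 V u : In u (nf_terms2 V) <->
  (exists k, u = tvar S2 k /\ In (S2, k) V) \/ (exists c, u = tF2 c /\ In c (nf_terms0 V)).
Proof.
  unfold nf_terms2; rewrite in_app_iff, in_flat_map, in_map_iff. split.
  - intros [((s, i) & Hi & Hu)|(c & Hc & Hi)]; [|right; eauto].
    destruct s; simpl in Hu; try tauto. destruct Hu as [Hu|[]]; subst; eauto.
  - intros [(k & -> & Hk)|(c & -> & Hc)]; [left; exists (S2, k)|right; exists c]; simpl; auto.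
Qed.

Lemma in_nf_terms1 V u : In u (nf_terms1 V) <->
  (exists j, u = tvar S1 j /\ In (S1, j) V) \/
  (exists a b, u = tF1 a b /\ In a (nf_terms2 V) /\ In b (nf_terms0 V)).
Proof.
  unfold nf_terms1; rewrite in_app_iff, !in_flat_map. split.
  - intros [((s, i) & Hi & Hu)|(a & Ha & Hu)].
    + destruct s; simpl in Hu; try tauto. destruct Hu as [Hu|[]]; subst; eauto.
    + apply in_map_iff in Hu as (b & <- & Hb). right; eauto.
  - intros [(j & -> & Hj)|(a & b & -> & Ha & Hb)]; [left; exists (S1, j); simpl; auto|].
    right; exists a; split; auto; apply in_map; auto.
Qed.

Lemma nf_in_nf_terms V s (t : term s) : term_over V t -> In (nf t) (nf_terms s V).
Proof.
  induction t; intro H; simpl.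
  - assert (In (s, n) V) by (apply H, tfree_tvar; auto).
    destruct s; simpl; [apply in_nf_terms0|apply in_nf_terms1|apply in_nf_terms2]; eauto.
  - specialize (IHt (term_over_F0_inv H)); simpl in IHt.
    apply in_nf_terms1 in IHt as [(j & -> & Hj)|(a & b & -> & Ha & Hb)]; simpl; auto.
    apply in_nf_terms0; eauto.
  - apply term_over_F1_inv in H as [H1 H2].
    apply in_nf_terms1; right; do 2 eexists; eauto.
  - apply in_nf_terms2; right; eauto using term_over_F2_inv.
  - specialize (IHt (term_over_F3_inv H)); simpl in IHt.
    apply in_nf_terms2 in IHt as [(j & -> & Hj)|(c & -> & Hc)]; simpl; auto.
    apply in_nf_terms0; eauto.
Qed.

Lemma nf_terms_over V s u : In u (nf_terms s V) -> term_over V u.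
Proof.
  assert (H0 : forall u, In u (nf_terms0 V) -> term_over V u).
  { intros u0 Hu; apply in_nf_terms0 in Hu as [(i & -> & Hi)|[(i & -> & Hi)|(i & -> & Hi)]];
    auto using term_over_tvar, term_over_F0, term_over_F3. }
  assert (H2 : forall u, In u (nf_terms2 V) -> term_over V u).
  { intros u0 Hu; apply in_nf_terms2 in Hu as [(i & -> & Hi)|(c & -> & Hc)];
    auto using term_over_tvar, term_over_F2. }
  destruct s; simpl; auto.
  intros Hu; apply in_nf_terms1 in Hu as [(i & -> & Hi)|(a & b & -> & Ha & Hb)];
    auto using term_over_tvar, term_over_F1.
Qed.

(** * Diagrams *)

Definition atoms_at s (V : list (sort * nat)) : list form :=
  map (fun p => fEq (fst p) (snd p)) (list_prod (nf_terms s V) (nf_terms s V)).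
Definition atoms V : list form := atoms_at S0 V ++ atoms_at S1 V ++ atoms_at S2 V.

Definition fTrue := fNot fFalse.

Fixpoint diagrams (l : list form) : list form :=
  match l with
  | [] => [fTrue]
  | a :: r => map (fAnd a) (diagrams r) ++ map (fAnd (fNot a)) (diagrams r)
  end.

Lemma in_diagrams_cons a r f : In f (diagrams (a :: r)) ->
  exists g, In g (diagrams r) /\ (f = fAnd a g \/ f = fAnd (fNot a) g).
Proof.
  simpl; rewrite in_app_iff, !in_map_iff. intros [(g & <- & Hg)|(g & <- & Hg)]; eauto.
Qed.

Lemma diagrams_cover M (v : valuation M) l : exists f, In f (diagrams l) /\ sat v f.
Proof.
  induction l as [|a r (f & Hf & Hs)]; simpl.
  - exists fTrue; simpl; auto.
  - destruct (classic (sat v a)); [exists (fAnd a f)|exists (fAnd (fNot a) f)];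
      rewrite in_app_iff, !in_map_iff; simpl; split; eauto.
Qed.

Lemma diagrams_agree M N (v : valuation M) (w : valuation N) l f :
  In f (diagrams l) -> sat v f -> sat w f -> forall a, In a l -> (sat v a <-> sat w a).
Proof.
  revert f; induction l as [|b r IH]; intros f Hf Hv Hw a Ha; [destruct Ha|].
  apply in_diagrams_cons in Hf as (g & Hg & [->| ->]); simpl in Hv, Hw;
    destruct Ha as [<-|Ha]; try tauto; eapply IH; eauto; tauto.
Qed.

Lemma diagrams_transfer M N (v : valuation M) (w : valuation N) l f :
  In f (diagrams l) -> sat v f -> (forall a, In a l -> (sat v a <-> sat w a)) -> sat w f.
Proof.
  revert f; induction l as [|b r IH]; intros f Hf Hv Ha.
  - destruct Hf as [<-|[]]; simpl; auto.
  - apply in_diagrams_cons in Hf as (g & Hg & [->| ->]); simpl in Hv |- *;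
      (split; [|apply (IH g Hg); [tauto|intros; apply Ha; right; auto]]).
    + apply Ha; [left|]; tauto.
    + rewrite <- Ha; [tauto|left]; auto.
Qed.

Lemma diagrams_qfree l f : In f (diagrams l) ->
  (forall a, In a l -> qfree a = true) -> qfree f = true.
Proof.
  revert f; induction l as [|b r IH]; intros f Hf Ha.
  - destruct Hf as [<-|[]]; reflexivity.
  - apply in_diagrams_cons in Hf as (g & Hg & [->| ->]); simpl;
      rewrite Ha, IH; simpl; auto; intros; apply Ha; right; auto.
Qed.

Lemma diagrams_ffree l f s n : In f (diagrams l) -> ffree s n f = true ->
  exists a, In a l /\ ffree s n a = true.
Proof.
  revert f; induction l as [|b r IH]; intros f Hf Hff.
  - destruct Hf as [<-|[]]; discriminate.
  - apply in_diagrams_cons in Hf as (g & Hg & Hfg).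
    assert (H : ffree s n b = true \/ ffree s n g = true)
      by (apply orb_true_iff; destruct Hfg as [-> | ->]; exact Hff).
    destruct H as [H|H]; [exists b; simpl; auto|].
    destruct (IH g Hg H) as (a & ? & ?); exists a; simpl; auto.
Qed.

Lemma in_atoms V a : In a (atoms V) <->
  exists s (t1 t2 : term s), a = fEq t1 t2 /\ In t1 (nf_terms s V) /\ In t2 (nf_terms s V).
Proof.
  unfold atoms, atoms_at; rewrite !in_app_iff, !in_map_iff. split.
  - intros [((t1, t2) & <- & Hp)|[((t1, t2) & <- & Hp)|((t1, t2) & <- & Hp)]];
      apply in_prod_iff in Hp; do 3 eexists; eauto.
  - intros (s & t1 & t2 & -> & H1 & H2).
    destruct s; [left|right; left|right; right]; exists (t1, t2); split; auto; apply in_prod; auto.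
Qed.

Lemma atoms_qfree V a : In a (atoms V) -> qfree a = true.
Proof. intro H; apply in_atoms in H as (s & t1 & t2 & -> & _); reflexivity. Qed.

Lemma atoms_ffree V a s n : In a (atoms V) -> ffree s n a = true -> In (s, n) V.
Proof.
  intro H; apply in_atoms in H as (s' & t1 & t2 & -> & H1 & H2).
  simpl; intro Hf; apply orb_true_iff in Hf as [Hf|Hf];
    [exact (nf_terms_over _ _ H1 _ _ Hf)|exact (nf_terms_over _ _ H2 _ _ Hf)].
Qed.

Lemma qf_agree_iff_atoms M N (v : valuation M) (w : valuation N) V :
  T0_axioms M -> T0_axioms N ->
  qf_agree v w V <-> (forall a, In a (atoms V) -> (sat v a <-> sat w a)).
Proof.
  intros HM HN; split.
  - intros H a Ha. apply in_atoms in Ha as (s & t1 & t2 & -> & H1 & H2).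
    apply H; eapply nf_terms_over; eauto.
  - intros H s t1 t2 H1 H2.
    rewrite <- (teval_nf v HM t1), <- (teval_nf v HM t2),
      <- (teval_nf w HN t1), <- (teval_nf w HN t2).
    apply (H (fEq (nf t1) (nf t2))), in_atoms. do 3 eexists; split; eauto using nf_in_nf_terms.
Qed.

Lemma qf_agree_of_diagram M N (v : valuation M) (w : valuation N) V f :
  T0_axioms M -> T0_axioms N -> In f (diagrams (atoms V)) -> sat v f -> sat w f ->
  qf_agree v w V.
Proof. intros HM HN Hf Hv Hw. apply qf_agree_iff_atoms; eauto using diagrams_agree. Qed.

Lemma diagram_of_qf_agree M N (v : valuation M) (w : valuation N) V f :
  T0_axioms M -> T0_axioms N -> In f (diagrams (atoms V)) -> sat v f ->
  qf_agree v w V -> sat w f.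
Proof. intros HM HN Hf Hv H. eapply diagrams_transfer; eauto. apply qf_agree_iff_atoms; auto. Qed.

(** * Rich models *)

Definition rich (N : structure) : Prop :=
  forall (M : structure) (v : valuation M) (w : valuation N) V s n (a : car M s)
         (L : list (car N s)),
    T0_axioms M -> qf_agree v w V -> (forall t : term s, term_over V t -> teval v t <> a) ->
    exists b, ~ In b L /\ qf_agree (upd v s n a) (upd w s n b) ((s, n) :: V).

Lemma rich_extend N : rich N -> forall M (v : valuation M) (w : valuation N) V s n (a : car M s),
  T0_axioms M -> qf_agree v w V -> exists b, qf_agree (upd v s n a) (upd w s n b) ((s, n) :: V).
Proof.
  intros HR M v w V s n a HM Hvw.
  destruct (classic (exists t : term s, term_over V t /\ teval v t = a)) as [(t & Ht & <-)|Hn].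
  - exists (teval w t). apply qf_agree_upd_teval; auto.
  - destruct (HR M v w V s n a [] HM Hvw) as (b & _ & Hb); [|eauto].
    intros t Ht E; apply Hn; eauto.
Qed.

Lemma ffree_quant_body s n p V :
  (forall s0 n0, negb (sort_eqb s0 s && Nat.eqb n0 n) && ffree s0 n0 p = true -> In (s0, n0) V) ->
  forall s' m, ffree s' m p = true -> In (s', m) ((s, n) :: V).
Proof.
  intros H s' m Hf. destruct (classic ((s', m) = (s, n))) as [E|E]; [left; auto|right].
  apply H. rewrite var_eqb_false, Hf; auto.
Qed.

(* Induction on [phi]; richness supplies the witnesses of quantifiers. *)
Lemma sat_transfer phi : forall M N, T0_axioms M -> T0_axioms N -> rich M -> rich N ->
  forall V (v : valuation M) (w : valuation N),
  (forall s n, ffree s n phi = true -> In (s, n) V) -> qf_agree v w V ->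
  (sat v phi <-> sat w phi).
Proof.
  induction phi; intros M N HM HN RM RN V v w Hf Hvw; simpl;
    try (rewrite (IHphi1 M N HM HN RM RN V v w), (IHphi2 M N HM HN RM RN V v w); try tauto;
         intros; apply Hf; simpl; rewrite H; auto using orb_true_r).
  - apply Hvw; intros s' m H; apply Hf; simpl; rewrite H; auto using orb_true_r.
  - tauto.
  - rewrite (IHphi M N HM HN RM RN V v w); auto; tauto.
  - pose proof (ffree_quant_body s n phi V Hf) as Hf'. split.
    + intros (a & Ha). destruct (rich_extend RN s n a HM Hvw) as (b & Hb).
      exists b. exact (proj1 (IHphi M N HM HN RM RN _ _ _ Hf' Hb) Ha).
    + intros (b & Hb). destruct (rich_extend RM s n b HN (qf_agree_sym Hvw)) as (a & Ha).
      exists a. exact (proj2 (IHphi M N HM HN RM RN _ _ _ Hf' (qf_agree_sym Ha)) Hb).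
  - pose proof (ffree_quant_body s n phi V Hf) as Hf'. split.
    + intros H b. destruct (rich_extend RM s n b HN (qf_agree_sym Hvw)) as (a & Ha).
      exact (proj1 (IHphi M N HM HN RM RN _ _ _ Hf' (qf_agree_sym Ha)) (H a)).
    + intros H a. destruct (rich_extend RN s n a HM Hvw) as (b & Hb).
      exact (proj2 (IHphi M N HM HN RM RN _ _ _ Hf' Hb) (H b)).
Qed.

Fixpoint tvars s (t : term s) : list (sort * nat) :=
  match t with
  | tvar s m => [(s, m)]
  | tF0 t1 | tF2 t1 | tF3 t1 => tvars t1
  | tF1 t1 t2 => tvars t1 ++ tvars t2
  end.

Lemma tvars_spec s (t : term s) s' m : tfree s' m t = true <-> In (s', m) (tvars t).
Proof.
  induction t; simpl; auto.
  - rewrite andb_true_iff, sort_eqb_true_iff, Nat.eqb_eq.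
    split; [intros [-> ->]; auto|intros [E|[]]; injection E; auto].
  - rewrite orb_true_iff, in_app_iff, IHt1, IHt2; tauto.
Qed.

Fixpoint fvars (phi : form) : list (sort * nat) :=
  match phi with
  | fEq t1 t2 => tvars t1 ++ tvars t2
  | fFalse => []
  | fNot p => fvars p
  | fAnd p q | fOr p q | fImp p q => fvars p ++ fvars q
  | fEx s n p | fAll s n p =>
      filter (fun x => negb (sort_eqb (fst x) s && Nat.eqb (snd x) n)) (fvars p)
  end.

Lemma fvars_spec phi s n : ffree s n phi = true <-> In (s, n) (fvars phi).
Proof.
  induction phi; simpl;
    try (rewrite orb_true_iff, in_app_iff; try rewrite IHphi1, IHphi2; try rewrite !tvars_spec; tauto).
  - split; [discriminate|tauto].
  - auto.
  - rewrite filter_In, andb_true_iff, IHphi; simpl; tauto.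
  - rewrite filter_In, andb_true_iff, IHphi; simpl; tauto.
Qed.

Lemma sat_transfer_fvars phi M N (v : valuation M) (w : valuation N) :
  T0_axioms M -> T0_axioms N -> rich M -> rich N -> qf_agree v w (fvars phi) ->
  (sat v phi <-> sat w phi).
Proof. intros HM HN RM RN. apply sat_transfer; auto. intros s n; apply fvars_spec. Qed.

(** * Extending a qf-type by one point *)

Section RelatedValues.
Variables (M N : structure) (v : valuation M) (w : valuation N) (W : list (sort * nat))
  (K : forall s, car M s -> car N s -> Prop).
Hypothesis K_vars : forall s m, In (s, m) W -> K s (v s m) (w s m).
Hypothesis K_F0 : forall a b, K S1 a b -> K S0 (fn0 M a) (fn0 N b).
Hypothesis K_F1 : forall z z' c c', K S2 z z' -> K S0 c c' -> K S1 (fn1 M z c) (fn1 N z' c').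
Hypothesis K_F2 : forall c c', K S0 c c' -> K S2 (fn2 M c) (fn2 N c').
Hypothesis K_F3 : forall z z', K S2 z z' -> K S0 (fn3 M z) (fn3 N z').
Hypothesis K_inj : forall s a b a' b', K s a b -> K s a' b' -> (a = a' <-> b = b').

Lemma teval_related s (t : term s) : term_over W t -> K s (teval v t) (teval w t).
Proof.
  induction t; simpl; intro Ht.
  - apply K_vars, Ht, tfree_tvar; auto.
  - apply K_F0, IHt, term_over_F0_inv, Ht.
  - apply term_over_F1_inv in Ht as [? ?]; apply K_F1; auto.
  - apply K_F2, IHt, term_over_F2_inv, Ht.
  - apply K_F3, IHt, term_over_F3_inv, Ht.
Qed.

Lemma qf_agree_of_related : qf_agree v w W.
Proof. intros s t1 t2 Ht1 Ht2. apply K_inj; apply teval_related; auto. Qed.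
End RelatedValues.

Definition term_values M N (v : valuation M) (w : valuation N) V s (m : car M s) (m' : car N s) :=
  exists t : term s, term_over V t /\ m = teval v t /\ m' = teval w t.

Section TermValues.
Variables (M N : structure) (v : valuation M) (w : valuation N) (V : list (sort * nat)).

Lemma term_values_eq_iff s m m' x x' :
  qf_agree v w V -> term_values v w V s m m' -> term_values v w V s x x' -> (m = x <-> m' = x').
Proof. intros H (t & Ht & -> & ->) (t' & Ht' & -> & ->). apply H; auto. Qed.

Lemma term_values_F0 m m' :
  term_values v w V S1 m m' -> term_values v w V S0 (fn0 M m) (fn0 N m').
Proof. intros (t & Ht & -> & ->). exists (tF0 t); auto using term_over_F0. Qed.

Lemma term_values_F1 z z' c c' : term_values v w V S2 z z' -> term_values v w V S0 c c' ->
  term_values v w V S1 (fn1 M z c) (fn1 N z' c').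
Proof.
  intros (t & Ht & -> & ->) (t' & Ht' & -> & ->). exists (tF1 t t'); auto using term_over_F1.
Qed.

Lemma term_values_F2 c c' :
  term_values v w V S0 c c' -> term_values v w V S2 (fn2 M c) (fn2 N c').
Proof. intros (t & Ht & -> & ->). exists (tF2 t); auto using term_over_F2. Qed.

Lemma term_values_F3 z z' :
  term_values v w V S2 z z' -> term_values v w V S0 (fn3 M z) (fn3 N z').
Proof. intros (t & Ht & -> & ->). exists (tF3 t); auto using term_over_F3. Qed.

Lemma qf_agree_upd_of_related s n (a : car M s) (b : car N s)
  (K : forall s, car M s -> car N s -> Prop) :
  (forall s' x y, term_values v w V s' x y -> K s' x y) -> K s a b ->
  (forall y y', K S1 y y' -> K S0 (fn0 M y) (fn0 N y')) ->
  (forall z z' c c', K S2 z z' -> K S0 c c' -> K S1 (fn1 M z c) (fn1 N z' c')) ->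
  (forall c c', K S0 c c' -> K S2 (fn2 M c) (fn2 N c')) ->
  (forall z z', K S2 z z' -> K S0 (fn3 M z) (fn3 N z')) ->
  (forall s x x' y y', K s x x' -> K s y y' -> (x = y <-> x' = y')) ->
  qf_agree (upd v s n a) (upd w s n b) ((s, n) :: V).
Proof.
  intros Hold Hnew. apply qf_agree_of_related.
  intros s' m Hi. destruct (classic ((s', m) = (s, n))) as [E|E].
  - injection E as -> ->. rewrite !upd_same. exact Hnew.
  - rewrite !upd_other by exact E. apply Hold.
    exists (tvar s' m). split; [|auto]. apply term_over_tvar. destruct Hi; congruence.
Qed.
End TermValues.

Lemma fn1_inj_r M : T0_axioms M -> forall {z z' x x'}, fn1 M z x = fn1 M z' x' -> x = x'.
Proof. intros [H0 _] z z' x x' E. rewrite <- (H0 z x), <- (H0 z' x'), E. reflexivity. Qed.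

(* Value of an optional [S2]-term, the default standing for the new point
   [F2 a]. *)
Definition opt_teval M (v : valuation M) (d : car M S2) (o : option (term S2)) :=
  match o with None => d | Some t => teval v t end.
Definition opt_term_over V (o : option (term S2)) :=
  match o with None => True | Some t => term_over V t end.

(* The qf-type of a new point [a] of sort [S0] is determined by the values
   of [F1 (F2 a) t] and the equalities among the [F1 z a]. *)
Section NewS0.
Variables (M N : structure) (v : valuation M) (w : valuation N) (V : list (sort * nat)) (n : nat)
  (a : car M S0) (b : car N S0).
Hypotheses (HM : T0_axioms M) (HN : T0_axioms N) (Hvw : qf_agree v w V)
  (Ha : forall t, term_over V t -> teval v t <> a) (Hb : forall t, term_over V t -> teval w t <> b)
  (HA : forall t0 t1, term_over V t0 -> term_over V t1 ->
     (fn1 M (fn2 M a) (teval v t0) = teval v t1 <-> fn1 N (fn2 N b) (teval w t0) = teval w t1))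
  (HB : forall o o', opt_term_over V o -> opt_term_over V o' ->
     (fn1 M (opt_teval v (fn2 M a) o) a = fn1 M (opt_teval v (fn2 M a) o') a <->
      fn1 N (opt_teval w (fn2 N b) o) b = fn1 N (opt_teval w (fn2 N b) o') b)).

Definition rel_S0 s : car M s -> car N s -> Prop :=
  match s return car M s -> car N s -> Prop with
  | S0 => fun m m' => term_values v w V S0 m m' \/ (m = a /\ m' = b)
  | S2 => fun m m' => term_values v w V S2 m m' \/ (m = fn2 M a /\ m' = fn2 N b)
  | S1 => fun m m' => term_values v w V S1 m m' \/
      (exists t0, term_over V t0 /\
         m = fn1 M (fn2 M a) (teval v t0) /\ m' = fn1 N (fn2 N b) (teval w t0)) \/
      (exists o, opt_term_over V o /\
         m = fn1 M (opt_teval v (fn2 M a) o) a /\ m' = fn1 N (opt_teval w (fn2 N b) o) b)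
  end.

Lemma rel_S0_inj_S0 x y x' y' : rel_S0 S0 x y -> rel_S0 S0 x' y' -> (x = x' <-> y = y').
Proof.
  intros [Hx|[-> ->]] [Hx'|[-> ->]]; try tauto.
  - eapply term_values_eq_iff; eauto.
  - destruct Hx as (t & Ht & -> & ->). split; intro E; [elim (Ha Ht E)|elim (Hb Ht E)].
  - destruct Hx' as (t & Ht & -> & ->).
    split; intro E; [elim (Ha Ht (eq_sym E))|elim (Hb Ht (eq_sym E))].
Qed.

Lemma rel_S0_inj_S2 x y x' y' : rel_S0 S2 x y -> rel_S0 S2 x' y' -> (x = x' <-> y = y').
Proof.
  assert (Hold : forall t, term_over V t -> teval v t <> fn2 M a /\ teval w t <> fn2 N b).
  { intros t Ht; split; intro E; [apply (Ha (term_over_F3 Ht))|apply (Hb (term_over_F3 Ht))];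
      simpl; rewrite E; [apply HM|apply HN]. }
  intros [Hx|[-> ->]] [Hx'|[-> ->]]; try tauto.
  - eapply term_values_eq_iff; eauto.
  - destruct Hx as (t & Ht & -> & ->). destruct (Hold t Ht); tauto.
  - destruct Hx' as (t & Ht & -> & ->). destruct (Hold t Ht).
    split; intro E; symmetry in E; tauto.
Qed.

Lemma rel_S0_inj_S1 x y x' y' : rel_S0 S1 x y -> rel_S0 S1 x' y' -> (x = x' <-> y = y').
Proof.
  assert (Hold : forall t o, term_over V t ->
    teval v t <> fn1 M (opt_teval v (fn2 M a) o) a /\ teval w t <> fn1 N (opt_teval w (fn2 N b) o) b).
  { intros t o Ht; split; intro E; [apply (Ha (term_over_F0 Ht))|apply (Hb (term_over_F0 Ht))];
      simpl; rewrite E; [apply HM|apply HN]. }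
  assert (Hrow : forall t0 o, term_over V t0 ->
    fn1 M (fn2 M a) (teval v t0) <> fn1 M (opt_teval v (fn2 M a) o) a /\
    fn1 N (fn2 N b) (teval w t0) <> fn1 N (opt_teval w (fn2 N b) o) b).
  { intros t0 o Ht0; split; intro E;
      [exact (Ha Ht0 (fn1_inj_r HM E))|exact (Hb Ht0 (fn1_inj_r HN E))]. }
  intros [Hx|[(t0 & Ht0 & -> & ->)|(o & Ho & -> & ->)]]
         [Hx'|[(t0' & Ht0' & -> & ->)|(o' & Ho' & -> & ->)]].
  - eapply term_values_eq_iff; eauto.
  - destruct Hx as (t & Ht & -> & ->).
    split; intro E; symmetry; apply HA; auto; symmetry; exact E.
  - destruct Hx as (t & Ht & -> & ->). destruct (Hold t o' Ht); tauto.
  - destruct Hx' as (t & Ht & -> & ->). apply HA; auto.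
  - split; intro E; apply f_equal, Hvw; auto;
      [apply (fn1_inj_r HM E)|apply (fn1_inj_r HN E)].
  - destruct (Hrow t0 o' Ht0); tauto.
  - destruct Hx' as (t & Ht & -> & ->). destruct (Hold t o Ht).
    split; intro E; symmetry in E; tauto.
  - destruct (Hrow t0' o Ht0'). split; intro E; symmetry in E; tauto.
  - apply HB; auto.
Qed.

Lemma qf_agree_upd_S0 : qf_agree (upd v S0 n a) (upd w S0 n b) ((S0, n) :: V).
Proof.
  destruct HM as [HM0 HM3], HN as [HN0 HN3].
  apply qf_agree_upd_of_related with (K := rel_S0); [intros [] ? ? ?; simpl; auto|simpl; auto| | | | |].
  - intros x y [HK|[(t0 & Ht0 & -> & ->)|(o & Ho & -> & ->)]]; simpl.
    + left; apply term_values_F0, HK.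
    + rewrite HM0, HN0. left; exists t0; auto.
    + rewrite HM0, HN0. right; auto.
  - intros z z' c c' [Hz|[-> ->]] [Hc|[-> ->]]; simpl.
    + left. apply term_values_F1; auto.
    + right; right. destruct Hz as (t2 & Ht2 & -> & ->). exists (Some t2); simpl; auto.
    + right; left. destruct Hc as (t0 & Ht0 & -> & ->). exists t0; auto.
    + right; right. exists None; simpl; auto.
  - intros c c' [Hc|[-> ->]]; simpl; [left; apply term_values_F2, Hc|right; auto].
  - intros z z' [Hz|[-> ->]]; simpl; [left; apply term_values_F3, Hz|right; auto].
  - intros []; [apply rel_S0_inj_S0|apply rel_S0_inj_S1|apply rel_S0_inj_S2].
Qed.
End NewS0.

Section NewS1.
Variables (M N : structure) (v : valuation M) (w : valuation N) (V : list (sort * nat)) (n : nat)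
  (a : car M S1) (b : car N S1) (ta : term S0).
Hypotheses (Hvw : qf_agree v w V) (Hta : term_over V ta)
  (Ea : fn0 M a = teval v ta) (Eb : fn0 N b = teval w ta)
  (Ha : forall t, term_over V t -> teval v t <> a) (Hb : forall t, term_over V t -> teval w t <> b).

Definition rel_S1 s : car M s -> car N s -> Prop :=
  match s return car M s -> car N s -> Prop with
  | S1 => fun m m' => term_values v w V S1 m m' \/ (m = a /\ m' = b)
  | s => fun m m' => term_values v w V s m m'
  end.

Lemma qf_agree_upd_S1 : qf_agree (upd v S1 n a) (upd w S1 n b) ((S1, n) :: V).
Proof.
  apply qf_agree_upd_of_related with (K := rel_S1); [intros [] ? ? ?; simpl; auto|simpl; auto| | | | |].
  - intros x y [HK|[-> ->]]; simpl; [apply term_values_F0, HK|exists ta; auto].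
  - intros z z' c c' Hz Hc; simpl in *. left. apply term_values_F1; auto.
  - intros c c' Hc; apply term_values_F2, Hc.
  - intros z z' Hz; apply term_values_F3, Hz.
  - intros [] x y x' y'; simpl; [eapply term_values_eq_iff; eauto| |eapply term_values_eq_iff; eauto].
    intros [Hx|[-> ->]] [Hx'|[-> ->]]; try tauto.
    + eapply term_values_eq_iff; eauto.
    + destruct Hx as (t & Ht & -> & ->). split; intro E; [elim (Ha Ht E)|elim (Hb Ht E)].
    + destruct Hx' as (t & Ht & -> & ->).
      split; intro E; [elim (Ha Ht (eq_sym E))|elim (Hb Ht (eq_sym E))].
Qed.
End NewS1.

Section NewS2.
Variables (M N : structure) (v : valuation M) (w : valuation N) (V : list (sort * nat)) (n : nat)
  (a : car M S2) (b : car N S2) (tx : term S0).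
Hypotheses (HM : T0_axioms M) (HN : T0_axioms N) (Hvw : qf_agree v w V) (Htx : term_over V tx)
  (Ea : fn3 M a = teval v tx) (Eb : fn3 N b = teval w tx)
  (Ha : forall t, term_over V t -> teval v t <> a) (Hb : forall t, term_over V t -> teval w t <> b)
  (HA : forall t0 t1, term_over V t0 -> term_over V t1 ->
     (fn1 M a (teval v t0) = teval v t1 <-> fn1 N b (teval w t0) = teval w t1)).

Definition rel_S2 s : car M s -> car N s -> Prop :=
  match s return car M s -> car N s -> Prop with
  | S0 => fun m m' => term_values v w V S0 m m'
  | S2 => fun m m' => term_values v w V S2 m m' \/ (m = a /\ m' = b)
  | S1 => fun m m' => term_values v w V S1 m m' \/
      (exists t0, term_over V t0 /\ m = fn1 M a (teval v t0) /\ m' = fn1 N b (teval w t0))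
  end.

Lemma rel_S2_inj_S1 x y x' y' : rel_S2 S1 x y -> rel_S2 S1 x' y' -> (x = x' <-> y = y').
Proof.
  intros [Hx|(t0 & Ht0 & -> & ->)] [Hx'|(t0' & Ht0' & -> & ->)].
  - eapply term_values_eq_iff; eauto.
  - destruct Hx as (t & Ht & -> & ->).
    split; intro E; symmetry; apply HA; auto; symmetry; exact E.
  - destruct Hx' as (t & Ht & -> & ->). apply HA; auto.
  - split; intro E; apply f_equal, Hvw; auto;
      [apply (fn1_inj_r HM E)|apply (fn1_inj_r HN E)].
Qed.

Lemma qf_agree_upd_S2 : qf_agree (upd v S2 n a) (upd w S2 n b) ((S2, n) :: V).
Proof.
  destruct HM as [HM0 HM3], HN as [HN0 HN3].
  apply qf_agree_upd_of_related with (K := rel_S2); [intros [] ? ? ?; simpl; auto|simpl; auto| | | | |].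
  - intros x y [HK|(t0 & Ht0 & -> & ->)]; simpl.
    + apply term_values_F0, HK.
    + exists t0; rewrite HM0, HN0; auto.
  - intros z z' c c' [Hz|[-> ->]] Hc; simpl.
    + left. apply term_values_F1; auto.
    + right. destruct Hc as (t0 & Ht0 & -> & ->). exists t0; auto.
  - intros c c' Hc; simpl in *; left; apply term_values_F2, Hc.
  - intros z z' [Hz|[-> ->]]; simpl; [apply term_values_F3, Hz|exists tx; auto].
  - intros [] x y x' y'; simpl; [eapply term_values_eq_iff; eauto|apply rel_S2_inj_S1|].
    intros [Hx|[-> ->]] [Hx'|[-> ->]]; try tauto.
    + eapply term_values_eq_iff; eauto.
    + destruct Hx as (t & Ht & -> & ->). split; intro E; [elim (Ha Ht E)|elim (Hb Ht E)].
    + destruct Hx' as (t & Ht & -> & ->).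
      split; intro E; [elim (Ha Ht (eq_sym E))|elim (Hb Ht (eq_sym E))].
Qed.
End NewS2.

(** * Sufficient conditions for richness *)

Definition decide (P : Prop) : bool := if excluded_middle_informative P then true else false.

Lemma decide_spec P : decide P = true <-> P.
Proof. unfold decide; destruct (excluded_middle_informative P); intuition discriminate. Qed.

Lemma decide_true P : decide P = true -> P.
Proof. apply decide_spec. Qed.

Fixpoint first_index {X} (p : X -> Prop) (l : list X) : nat :=
  match l with
  | [] => 0
  | x :: r => if decide (p x) then 0 else S (first_index p r)
  end.

Lemma nth_first_index X (p : X -> Prop) l : (exists x, In x l /\ p x) ->
  exists x, nth_error l (first_index p l) = Some x /\ p x.
Proof.
  induction l as [|y r IH]; simpl; [firstorder|].
  destruct (decide (p y)) eqn:E; [intros _; exists y; apply decide_true in E; auto|].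
  intros (x & [<-|Hx] & Hp); [rewrite (proj2 (decide_spec _) Hp) in E; discriminate|]. apply IH; eauto.
Qed.

Lemma first_index_eq_iff X Y (f : X -> Y) l r r' :
  (exists x, In x l /\ f x = r) -> (exists x, In x l /\ f x = r') ->
  (first_index (fun x => f x = r) l = first_index (fun x => f x = r') l <-> r = r').
Proof.
  intros Hr Hr'. split; [|intros ->; reflexivity]. intro E.
  destruct (nth_first_index _ _ Hr) as (x & Ex & <-), (nth_first_index _ _ Hr') as (x' & Ex' & <-).
  rewrite E, Ex' in Ex. congruence.
Qed.

(* A prescription for a value [y] of [F1]: either a given value, or [None],
   meaning that [y] must avoid [L1]. *)
Definition prescribed {N : structure} (y : car N S1) (o : option (car N S1))
  (L1 : list (car N S1)) : Prop :=
  match o with Some y' => y = y' | None => ~ In y L1 end.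

Definition functional_list X Y (P : list (X * Y)) :=
  forall c o o', In (c, o) P -> In (c, o') P -> o = o'.

(* Together with T0+, the following three properties imply richness; they
   say that new elements of each sort exist with any consistent finite
   prescription of the values of [F1] on them. *)
Definition fibres_F0_infinite N :=
  forall (c : car N S0) (L : list (car N S1)), exists b, fn0 N b = c /\ ~ In b L.

Definition S2_generic N := forall c0 (L2 : list (car N S2)) (L1 : list (car N S1))
  (P : list (car N S0 * option (car N S1))),
  functional_list P -> (forall c y, In (c, Some y) P -> fn0 N y = c) ->
  exists z, fn3 N z = c0 /\ ~ In z L2 /\
    (forall c o, In (c, o) P -> prescribed (fn1 N z c) o L1).

(* The labels in [Lab] prescribe which of the [F1 z b] coincide. *)
Definition S0_generic N := forall (L0 : list (car N S0)) (L1 : list (car N S1))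
  (P : list (car N S0 * option (car N S1))) (Lab : list (car N S2 * nat)) (l0 : nat),
  functional_list P -> (forall c y, In (c, Some y) P -> fn0 N y = c) ->
  (forall c o, In (c, o) P -> In c L0) ->
  functional_list Lab -> (forall z l, In (z, l) Lab -> In (fn3 N z) L0) ->
  exists b, ~ In b L0 /\ (forall c o, In (c, o) P -> prescribed (fn1 N (fn2 N b) c) o L1) /\
    (forall z l z' l', In (z, l) ((fn2 N b, l0) :: Lab) -> In (z', l') ((fn2 N b, l0) :: Lab) ->
       (fn1 N z b = fn1 N z' b <-> l = l')).

Section RowPrescription.
Variables (M N : structure) (v : valuation M) (w : valuation N) (V : list (sort * nat)).
Hypotheses (HM : T0_axioms M) (HN : T0_axioms N) (Hvw : qf_agree v w V).

Definition nf_values s : list (car N s) := map (fun t => teval w t) (nf_terms s V).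

Lemma in_nf_values s (t : term s) : term_over V t -> In (teval w t) (nf_values s).
Proof. intro Ht. rewrite <- (teval_nf w HN t). apply in_map, nf_in_nf_terms, Ht. Qed.

Lemma not_named_of_not_in s (b : car N s) L : ~ In b (nf_values s ++ L) ->
  forall t, term_over V t -> teval w t <> b.
Proof. intros Hb t Ht E. apply Hb, in_app_iff; left; rewrite <- E; apply in_nf_values; auto. Qed.

(* [gM] is a row [F1 z -] of a new point [z] of [M]; its prescription for
   [N] copies the named values of [gM] and asks for new values elsewhere. *)
Variables (gM : car M S0 -> car M S1) (gN : car N S0 -> car N S1).
Hypothesis HgM : forall x, fn0 M (gM x) = x.

Definition row_value (t0 : term S0) : option (car N S1) :=
  option_map (fun t => teval w t)
    (find (fun t1 => decide (teval v t1 = gM (teval v t0))) (nf_terms S1 V)).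

Definition row_prescription := map (fun t0 => (teval w t0, row_value t0)) (nf_terms S0 V).

Lemma row_prescription_functional : functional_list row_prescription.
Proof.
  intros c o o' H1 H2. apply in_map_iff in H1 as (t0 & E1 & H1), H2 as (t0' & E2 & H2).
  injection E1 as <- <-; injection E2 as E2 <-.
  assert (E : teval v t0 = teval v t0') by (apply Hvw; try eapply nf_terms_over; eauto).
  unfold row_value. rewrite E. reflexivity.
Qed.

Lemma row_prescription_valid c y : In (c, Some y) row_prescription -> fn0 N y = c.
Proof.
  intro H. apply in_map_iff in H as (t0 & E & Ht0). injection E as <- Ey.
  unfold row_value in Ey. destruct (find _ _) as [t1|] eqn:Ef; [|discriminate].
  injection Ey as <-. apply find_some in Ef as [Ht1 Ev]. apply decide_true in Ev.
  change (fn0 N (teval w t1)) with (teval w (tF0 t1)).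
  apply Hvw; eauto using term_over_F0, nf_terms_over. simpl. rewrite Ev, HgM. reflexivity.
Qed.

Lemma row_prescription_keys c o : In (c, o) row_prescription -> In c (nf_values S0).
Proof. intro H. apply in_map_iff in H as (t0 & E & Ht0). injection E as <- _. apply in_map, Ht0. Qed.

Lemma row_agree_of_prescribed :
  (forall c o, In (c, o) row_prescription -> prescribed (gN c) o (nf_values S1)) ->
  forall t0 t1, term_over V t0 -> term_over V t1 ->
  (gM (teval v t0) = teval v t1 <-> gN (teval w t0) = teval w t1).
Proof.
  intros H t0 t1 Ht0 Ht1.
  assert (Hin : In (teval w (nf t0), row_value (nf t0)) row_prescription)
    by (apply (in_map (fun t => (teval w t, row_value t))), nf_in_nf_terms, Ht0).
  specialize (H _ _ Hin). rewrite (teval_nf w HN) in H. rewrite <- (teval_nf v HM t0).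
  unfold row_value in H. destruct (find _ _) as [t1'|] eqn:Ef; simpl in H.
  - apply find_some in Ef as [Ht1' Ev]. apply decide_true in Ev. rewrite H, <- Ev.
    apply Hvw; eauto using nf_terms_over.
  - split; intro E; exfalso.
    + apply find_none with (x := nf t1) in Ef; [|apply nf_in_nf_terms; auto].
      rewrite (teval_nf v HM), E, (proj2 (decide_spec _) eq_refl) in Ef. discriminate.
    + apply H. rewrite E. apply in_nf_values; auto.
Qed.
End RowPrescription.

Section ExtendS0.
Variables (M N : structure) (v : valuation M) (w : valuation N) (V : list (sort * nat))
  (a : car M S0).
Hypotheses (HM : T0_axioms M) (HN : T0_axioms N) (Hvw : qf_agree v w V).

(* The column [F1 z a] of the new point is encoded by labels: [label r] is
   the first optional [S2]-term whose column entry is [r]. *)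
Definition column o := fn1 M (opt_teval v (fn2 M a) o) a.
Definition column_terms := None :: map Some (nf_terms S2 V).
Definition label r := first_index (fun o => column o = r) column_terms.
Definition column_labels := map (fun t2 => (teval w t2, label (fn1 M (teval v t2) a))) (nf_terms S2 V).

Lemma column_labels_functional : functional_list column_labels.
Proof.
  intros z l l' H1 H2. apply in_map_iff in H1 as (t2 & E1 & H1), H2 as (t2' & E2 & H2).
  injection E1 as <- <-; injection E2 as E2 <-.
  assert (E : teval v t2 = teval v t2') by (apply Hvw; try eapply nf_terms_over; eauto).
  rewrite E; reflexivity.
Qed.

Lemma column_labels_keys z l : In (z, l) column_labels -> In (fn3 N z) (nf_values w V S0).
Proof.
  intro H. apply in_map_iff in H as (t2 & E & Ht2). injection E as <- _.
  change (fn3 N (teval w t2)) with (teval w (tF3 t2)).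
  apply in_nf_values; eauto using term_over_F3, nf_terms_over.
Qed.

Lemma column_hit o : opt_term_over V o -> exists x, In x column_terms /\ column x = column o.
Proof.
  destruct o as [t2|]; simpl; intro Ho; [|exists None; simpl; auto].
  exists (Some (nf t2)). split; [right; apply in_map, nf_in_nf_terms; auto|].
  unfold column; simpl. rewrite (teval_nf v HM). reflexivity.
Qed.

Lemma column_in_labels (b : car N S0) o : opt_term_over V o ->
  In (opt_teval w (fn2 N b) o, label (column o)) ((fn2 N b, label (column None)) :: column_labels).
Proof.
  destruct o as [t2|]; simpl; intro Ho; auto. right.
  apply in_map_iff. exists (nf t2). rewrite (teval_nf w HN), (teval_nf v HM).
  split; auto. apply nf_in_nf_terms; auto.
Qed.

Lemma extend_S0 n (L : list (car N S0)) :
  S0_generic N -> (forall t, term_over V t -> teval v t <> a) ->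
  exists b, ~ In b L /\ qf_agree (upd v S0 n a) (upd w S0 n b) ((S0, n) :: V).
Proof.
  intros HR Ha. pose proof HM as [HM0 _].
  destruct (HR (nf_values w V S0 ++ L) (nf_values w V S1) (row_prescription v w V (fn1 M (fn2 M a)))
     column_labels (label (column None))) as (b & Hb & HP & HL).
  - apply row_prescription_functional; auto.
  - apply row_prescription_valid; auto.
  - intros c o H. apply in_app_iff; left. eapply row_prescription_keys; eauto.
  - apply column_labels_functional.
  - intros z l H. apply in_app_iff; left. eapply column_labels_keys; eauto.
  - exists b. split; [intro H; apply Hb, in_app_iff; auto|].
    apply qf_agree_upd_S0; auto.
    + eapply not_named_of_not_in; eauto.
    + apply (row_agree_of_prescribed HM HN Hvw); auto.
    + intros o o' Ho Ho'. fold (column o) (column o').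
      rewrite (HL _ _ _ _ (column_in_labels b o Ho) (column_in_labels b o' Ho')).
      symmetry; apply first_index_eq_iff; apply column_hit; auto.
Qed.
End ExtendS0.

Lemma extend_S1 M N (v : valuation M) (w : valuation N) V n a (L : list (car N S1)) ta :
  T0_axioms N -> fibres_F0_infinite N -> qf_agree v w V ->
  (forall t, term_over V t -> teval v t <> a) -> term_over V ta -> fn0 M a = teval v ta ->
  exists b, ~ In b L /\ qf_agree (upd v S1 n a) (upd w S1 n b) ((S1, n) :: V).
Proof.
  intros HN HR Hvw Ha Hta Ea.
  destruct (HR (teval w ta) (nf_values w V S1 ++ L)) as (b & Eb & Hb).
  exists b. split; [intro H; apply Hb, in_app_iff; auto|].
  eapply qf_agree_upd_S1; eauto. eapply not_named_of_not_in; eauto.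
Qed.

Lemma extend_S2 M N (v : valuation M) (w : valuation N) V n a (L : list (car N S2)) tx :
  T0_axioms M -> T0_axioms N -> S2_generic N -> qf_agree v w V ->
  (forall t, term_over V t -> teval v t <> a) -> term_over V tx -> fn3 M a = teval v tx ->
  exists b, ~ In b L /\ qf_agree (upd v S2 n a) (upd w S2 n b) ((S2, n) :: V).
Proof.
  intros HM HN HR Hvw Ha Htx Ea. pose proof HM as [HM0 _].
  destruct (HR (teval w tx) (nf_values w V S2 ++ L) (nf_values w V S1)
                (row_prescription v w V (fn1 M a))) as (b & Eb & Hb & HP).
  - apply row_prescription_functional; auto.
  - apply row_prescription_valid; auto.
  - exists b. split; [intro H; apply Hb, in_app_iff; auto|].
    eapply qf_agree_upd_S2; eauto.
    + eapply not_named_of_not_in; eauto.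
    + apply (row_agree_of_prescribed HM HN Hvw); auto.
Qed.

Definition base_term s : term s -> term S0 :=
  match s return term s -> term S0 with S0 => fun t => t | S1 => tF0 | S2 => tF3 end.
Definition base M s : car M s -> car M S0 :=
  match s return car M s -> car M S0 with S0 => fun x => x | S1 => fn0 M | S2 => fn3 M end.

Lemma teval_base_term M (v : valuation M) s (t : term s) :
  teval v (base_term t) = base M s (teval v t).
Proof. destruct s; reflexivity. Qed.

Lemma term_over_base_term V s (t : term s) : term_over V t -> term_over V (base_term t).
Proof. destruct s; simpl; auto using term_over_F0, term_over_F3. Qed.

Lemma fresh_var_index (V : list (sort * nat)) : exists K, forall s m, In (s, m) V -> m < K.
Proof.
  induction V as [|(s0, m0) r (K & HK)]; [exists 0; intros s m []|].
  exists (S (max K m0)). intros s m [E|H]; [injection E as -> ->; lia|]. specialize (HK s m H); lia.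
Qed.

Lemma qf_agree_drop_var M N (v : valuation M) (w : valuation N) V s n a b K
  (x : car M S0) (y : car N S0) :
  (forall s' m, In (s', m) V -> m < K) -> s <> S0 ->
  qf_agree (upd (upd v S0 K x) s n a) (upd (upd w S0 K y) s n b) ((s, n) :: (S0, K) :: V) ->
  qf_agree (upd v s n a) (upd w s n b) ((s, n) :: V).
Proof.
  intros HK Hs H. apply qf_agree_incl with (V := (s, n) :: V) in H;
    [|intros p [<-|Hp]; [left|right; right]; auto].
  assert (Hupd : forall X (u : valuation X) c d s' m, In (s', m) ((s, n) :: V) ->
            upd (upd u S0 K c) s n d s' m = upd u s n d s' m).
  { intros X u c d s' m Hi. destruct (classic ((s', m) = (s, n))) as [E|E].
    - injection E as -> ->. rewrite !upd_same. reflexivity.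
    - rewrite (@upd_other X (upd u S0 K c) s n d s' m E), (@upd_other X u s n d s' m E).
      apply upd_other.
      destruct Hi as [E'|Hi]; [congruence|]. intro E'; injection E' as -> ->.
      specialize (HK _ _ Hi); lia. }
  eapply qf_agree_ext; [exact H| |]; intros; apply Hupd; auto.
Qed.

(* A new point of sort [S1] or [S2] is handled by first adding its image
   [F0 a] or [F3 a] in [S0] as an extra variable, if it is not named. *)
Lemma extend_via_base M N (v : valuation M) (w : valuation N) V s n (a : car M s)
  (L : list (car N s)) :
  T0_axioms M -> T0_axioms N -> S0_generic N -> s <> S0 -> qf_agree v w V ->
  (forall t, term_over V t -> teval v t <> a) ->
  (forall (v' : valuation M) (w' : valuation N) V' ta, qf_agree v' w' V' ->
     (forall t, term_over V' t -> teval v' t <> a) -> term_over V' ta -> base M s a = teval v' ta ->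
     exists b, ~ In b L /\ qf_agree (upd v' s n a) (upd w' s n b) ((s, n) :: V')) ->
  exists b, ~ In b L /\ qf_agree (upd v s n a) (upd w s n b) ((s, n) :: V).
Proof.
  intros HM HN HR Hs Hvw Ha Hover.
  destruct (classic (exists ta, term_over V ta /\ teval v ta = base M s a)) as [(ta & Hta & Ea)|Hno];
    [eapply Hover; eauto|].
  destruct (fresh_var_index V) as (K & HK).
  destruct (@extend_S0 M N v w V (base M s a) HM HN Hvw K (map (base N s) L) HR) as (bu & Hbu & Hu);
    [intros t Ht E; apply Hno; eauto|].
  enough (Hfin : exists b, ~ In b L /\ qf_agree (upd (upd v S0 K (base M s a)) s n a)
                    (upd (upd w S0 K bu) s n b) ((s, n) :: (S0, K) :: V)).
  { destruct Hfin as (b & Hb & Hap). exists b. split; auto. eapply qf_agree_drop_var; eauto. }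
  assert (HKin : term_over ((S0, K) :: V) (tvar S0 K)) by (apply term_over_tvar; left; auto).
  destruct (classic (exists t, term_over ((S0, K) :: V) t /\ teval (upd v S0 K (base M s a)) t = a))
    as [(t & Ht & Et)|Hno2]; [|eapply Hover; eauto; simpl; rewrite upd_same; auto].
  exists (teval (upd w S0 K bu) t). split.
  - intro Hi. apply Hbu, in_map_iff. exists (teval (upd w S0 K bu) t). split; auto.
    assert (E : teval (upd w S0 K bu) (base_term t) = teval (upd w S0 K bu) (tvar S0 K)).
    { apply Hu; auto using term_over_base_term.
      rewrite teval_base_term, Et; simpl; rewrite upd_same. reflexivity. }
    rewrite teval_base_term in E; simpl in E; rewrite upd_same in E. exact E.
  - pose proof (qf_agree_upd_teval (n := n) Hu Ht) as H. rewrite Et in H. exact H.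
Qed.

Lemma rich_of_generic N : T0_axioms N -> S0_generic N -> fibres_F0_infinite N -> S2_generic N ->
  rich N.
Proof.
  intros HN H0 H1 H2 M v w V s n a L HM Hvw Ha. destruct s.
  - apply extend_S0; auto.
  - apply extend_via_base; auto; [discriminate|]. intros; eapply extend_S1; eauto.
  - apply extend_via_base; auto; [discriminate|]. intros; eapply extend_S2; eauto.
Qed.

(** * The theory T* *)

Definition Tstar : theory := fun phi => sentence phi /\
  forall R, T0_axioms R -> rich R -> forall r : valuation R, sat r phi.

Lemma Tstar_sentence phi : Tstar phi -> sentence phi.
Proof. intros [H _]; exact H. Qed.

Lemma ax_F0F1_sentence : sentence ax_F0F1.
Proof. intros s n; destruct s, n; reflexivity. Qed.
Lemma ax_F3F2_sentence : sentence ax_F3F2.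
Proof. intros s n; destruct s, n; reflexivity. Qed.

Lemma Tstar_T0 N : is_model Tstar N -> T0_axioms N.
Proof.
  intro H. apply is_model_T0plus. intros phi Hphi v. apply H. split.
  - destruct Hphi as [->| ->]; auto using ax_F0F1_sentence, ax_F3F2_sentence.
  - intros R HR _ r. apply is_model_T0plus in HR. apply HR; auto.
Qed.

Lemma is_model_Tstar_of_rich R : T0_axioms R -> rich R -> is_model Tstar R.
Proof. intros H1 H2 phi [_ H] v. apply H; auto. Qed.

Fixpoint fAlls (l : list (sort * nat)) (phi : form) : form :=
  match l with [] => phi | (s, n) :: r => fAll s n (fAlls r phi) end.

Lemma sat_fAlls R phi l :
  (forall r : valuation R, sat r phi) -> forall r : valuation R, sat r (fAlls l phi).
Proof. induction l as [|(s, n) l IH]; simpl; auto. Qed.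

Lemma sat_of_fAlls R phi l :
  (forall r : valuation R, sat r (fAlls l phi)) -> forall r : valuation R, sat r phi.
Proof.
  induction l as [|(s, n) l IH]; simpl; auto.
  intros H. apply IH. intro r. specialize (H r (r s n)). rewrite upd_eta in H. exact H.
Qed.

Lemma ffree_fAlls l phi s n : ffree s n (fAlls l phi) = true -> ffree s n phi = true /\ ~ In (s, n) l.
Proof.
  induction l as [|(s', n') l IH]; simpl; [tauto|].
  intro H. apply andb_true_iff in H as [H1 H2]. destruct (IH H2) as [IH1 IH2].
  split; auto. intros [E|E]; auto. apply negb_true_iff, var_eqb_false_iff in H1. congruence.
Qed.

Lemma fAlls_sentence l phi : (forall s n, ffree s n phi = true -> In (s, n) l) -> sentence (fAlls l phi).
Proof.
  intros H s n. destruct (ffree s n (fAlls l phi)) eqn:E; auto.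
  apply ffree_fAlls in E as [E1 E2]. elim E2; auto.
Qed.

Fixpoint distinct_from s n (l : list nat) : form :=
  match l with
  | [] => fTrue
  | i :: r => fAnd (fNot (fEq (tvar s n) (tvar s i))) (distinct_from s n r)
  end.

Lemma sat_distinct_from M (u : valuation M) s n l :
  sat u (distinct_from s n l) <-> forall i, In i l -> u s n <> u s i.
Proof.
  induction l as [|i r IH]; simpl; [split; auto; intros _ _ []|].
  rewrite IH. split; [intros [H1 H2] j [<-|Hj]; auto|intros H; split; auto].
Qed.

Lemma ffree_distinct_from s n l s' m : ffree s' m (distinct_from s n l) = true ->
  (s', m) = (s, n) \/ (s' = s /\ In m l).
Proof.
  induction l as [|i r IH]; simpl; [discriminate|].
  rewrite !orb_true_iff. intros [[H|H]|H].
  - apply tfree_tvar in H as [-> ->]; auto.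
  - apply tfree_tvar in H as [-> ->]; auto.
  - destruct (IH H) as [E|[E1 E2]]; auto.
Qed.

(* For tuples of diagram [fV] and any [k] elements [x_K, ..., x_(K+k-1)],
   some element [x_n] realizes [fX] over the tuple and avoids the [x_i]. *)
Definition richness_axiom V s n K k (fV fX : form) : form :=
  fAlls (V ++ map (fun i => (s, i)) (seq K k))
    (fImp fV (fEx s n (fAnd fX (distinct_from s n (seq K k))))).

Lemma richness_axiom_sentence V s n K k fV fX :
  In fV (diagrams (atoms V)) -> In fX (diagrams (atoms ((s, n) :: V))) ->
  sentence (richness_axiom V s n K k fV fX).
Proof.
  intros HfV HfX. apply fAlls_sentence. intros s' m Hf. apply in_app_iff.
  simpl in Hf. apply orb_true_iff in Hf as [Hf|Hf].
  - destruct (diagrams_ffree _ _ _ _ HfV Hf) as (at0 & Hat & Hf'). left. eapply atoms_ffree; eauto.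
  - apply andb_true_iff in Hf as [Hne Hf]. apply negb_true_iff, var_eqb_false_iff in Hne.
    apply orb_true_iff in Hf as [Hf|Hf].
    + destruct (diagrams_ffree _ _ _ _ HfX Hf) as (at0 & Hat & Hf').
      apply atoms_ffree with (V := (s, n) :: V) in Hf'; auto.
      destruct Hf' as [E|E]; [congruence|auto].
    + apply ffree_distinct_from in Hf as [E|[-> E2]]; [congruence|].
      right. apply in_map; auto.
Qed.

Lemma richness_axiom_in_Tstar M (v : valuation M) V s n (a : car M s) K k fV fX :
  T0_axioms M -> (forall t : term s, term_over V t -> teval v t <> a) ->
  (forall s' m, In (s', m) ((s, n) :: V) -> m < K) ->
  In fV (diagrams (atoms V)) -> In fX (diagrams (atoms ((s, n) :: V))) ->
  sat v fV -> sat (upd v s n a) fX ->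
  Tstar (richness_axiom V s n K k fV fX).
Proof.
  intros HM Ha HK HfV HfX HvfV HvfX. split; [apply richness_axiom_sentence; auto|].
  intros R HR RR. apply sat_fAlls. intros r Hr.
  destruct (RR M v r V s n a (map (fun i => r s i) (seq K k)) HM) as (c & Hc & Hap);
    [eapply qf_agree_of_diagram; eauto|auto|].
  exists c. split; [apply (diagram_of_qf_agree (v := upd v s n a) fX HM HR HfX HvfX Hap)|].
  apply sat_distinct_from. intros i Hi. rewrite upd_same, upd_other.
  - intro E. apply Hc. rewrite E. apply in_map; auto.
  - intro E. injection E as ->. apply in_seq in Hi. pose proof (HK s n (or_introl eq_refl)). lia.
Qed.

Definition upd_block N (w : valuation N) s K (L : list (car N s)) : valuation N :=
  fun s' m => match sort_eq_dec s s' with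
              | left e => if (K <=? m) && (m <? K + length L)
                          then eq_rect s (car N) (nth (m - K) L (w s K)) s' e else w s' m
              | right _ => w s' m end.

Lemma upd_block_low N (w : valuation N) s K L s' m : m < K -> upd_block w s K L s' m = w s' m.
Proof.
  intro H. unfold upd_block. destruct (sort_eq_dec s s'); auto.
  destruct (K <=? m) eqn:E; auto. apply Nat.leb_le in E; lia.
Qed.

Lemma upd_block_high N (w : valuation N) s K (L : list (car N s)) i : i < length L ->
  upd_block w s K L s (K + i) = nth i L (w s K).
Proof.
  intro H. unfold upd_block. rewrite sort_eq_dec_refl.
  replace ((K <=? K + i) && (K + i <? K + length L)) with true.
  - simpl. f_equal. lia.
  - symmetry; apply andb_true_iff; split; [apply Nat.leb_le|apply Nat.ltb_lt]; lia.
Qed.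

Lemma Tstar_model_rich N : is_model Tstar N -> rich N.
Proof.
  intros HNm M v w V s n a L HM Hvw Ha. pose proof (Tstar_T0 HNm) as HN.
  destruct (diagrams_cover v (atoms V)) as (fV & HfV & HvfV).
  destruct (diagrams_cover (upd v s n a) (atoms ((s, n) :: V))) as (fX & HfX & HvfX).
  destruct (fresh_var_index ((s, n) :: V)) as (K & HK).
  pose proof (@richness_axiom_in_Tstar M v V s n a K (length L) fV fX HM Ha HK HfV HfX HvfV HvfX)
    as Hax.
  pose proof (sat_of_fAlls _ _ (HNm _ Hax)) as Hsat.
  set (r := upd_block w s K L).
  assert (Hrw : forall s' m, In (s', m) V -> r s' m = w s' m)
    by (intros s' m Hi; apply upd_block_low, (HK s' m); right; auto).
  destruct (Hsat r) as (b & HbX & Hbne).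
  - apply (sat_ext_qfree r w fV).
    + eapply diagrams_qfree; eauto using atoms_qfree.
    + intros s' m Hf. apply Hrw. destruct (diagrams_ffree _ _ _ _ HfV Hf) as (at0 & Hat & Hf').
      eapply atoms_ffree; eauto.
    + exact (diagram_of_qf_agree fV HM HN HfV HvfV Hvw).
  - exists b. split.
    + intro Hb. apply In_nth with (d := w s K) in Hb as (i & Hi & Ei).
      apply sat_distinct_from with (i := K + i) in Hbne; [|apply in_seq; lia].
      apply Hbne. rewrite upd_same, upd_other.
      * unfold r. rewrite upd_block_high; auto.
      * intro E. injection E as E. specialize (HK s n (or_introl eq_refl)). lia.
    + eapply qf_agree_ext; [eapply qf_agree_of_diagram with (w := upd r s n b); eauto| |]; auto.
      intros s' m Hi. destruct (classic ((s', m) = (s, n))) as [E|E].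
      * injection E as -> ->. rewrite !upd_same; auto.
      * rewrite !upd_other by auto. destruct Hi as [E'|Hi]; [congruence|]. apply Hrw; auto.
Qed.

Fixpoint bigOr (l : list form) : form :=
  match l with [] => fFalse | f :: r => fOr f (bigOr r) end.

Lemma sat_bigOr M (v : valuation M) l : sat v (bigOr l) <-> exists f, In f l /\ sat v f.
Proof.
  induction l as [|f r IH]; simpl; [firstorder|].
  rewrite IH. split; [intros [H|(g & Hg & H)]; eauto|intros (g & [<-|Hg] & H); eauto].
Qed.

Lemma bigOr_qfree l : (forall f, In f l -> qfree f = true) -> qfree (bigOr l) = true.
Proof. induction l as [|f r IH]; simpl; auto. intro H. rewrite H, IH; auto. Qed.

Lemma ffree_bigOr l s n : ffree s n (bigOr l) = true -> exists f, In f l /\ ffree s n f = true.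
Proof.
  induction l as [|f r IH]; simpl; [discriminate|].
  rewrite orb_true_iff. intros [H|H]; eauto. destruct (IH H) as (g & ? & ?); eauto.
Qed.

(* [phi] is equivalent to the disjunction of the diagrams of its free
   variables that are consistent with [phi] in some rich model. *)
Lemma Tstar_QE : quantifier_elimination Tstar.
Proof.
  intro phi. set (V := fvars phi).
  set (good := fun f => exists R (r : valuation R), T0_axioms R /\ rich R /\ sat r f /\ sat r phi).
  exists (bigOr (filter (fun f => decide (good f)) (diagrams (atoms V)))). split; [|split].
  - apply bigOr_qfree. intros f Hf. apply filter_In in Hf.
    eapply diagrams_qfree; [apply Hf|apply atoms_qfree].
  - intros s n H. apply ffree_bigOr in H as (f & Hf & H). apply filter_In in Hf.
    destruct (diagrams_ffree _ _ _ _ (proj1 Hf) H) as (at0 & Hat & H').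
    apply fvars_spec. eapply atoms_ffree; eauto.
  - intros M HMm v. pose proof (Tstar_T0 HMm) as HM. pose proof (Tstar_model_rich HMm) as RM.
    rewrite sat_bigOr. split.
    + intro Hp. destruct (diagrams_cover v (atoms V)) as (f & Hf & Hv).
      exists f. split; auto. apply filter_In. split; auto. apply decide_spec. exists M, v. auto.
    + intros (f & Hf & Hv). apply filter_In in Hf as [Hf Hg].
      apply decide_true in Hg as (R & r & HR & RR & Hr & Hp).
      eapply sat_transfer_fvars; eauto. eapply qf_agree_of_diagram; eauto.
Qed.

Lemma Tstar_models_agree M N : is_model Tstar M -> is_model Tstar N ->
  forall phi, sentence phi -> forall (vM : valuation M) (vN : valuation N), sat vM phi <-> sat vN phi.
Proof.
  intros HM HN phi Hs vM vN.
  apply (sat_transfer phi (Tstar_T0 HM) (Tstar_T0 HN) (Tstar_model_rich HM) (Tstar_model_rich HN)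
           (V := [])); [|apply qf_agree_nil].
  intros s n H. rewrite Hs in H. discriminate.
Qed.

Lemma teval_vmap M N (f : embedding M N) (v : valuation M) s (t : term s) :
  teval (vmap f v) t = emap f s (teval v t).
Proof.
  induction t; simpl; auto.
  - rewrite IHt, emap_F0; auto.
  - rewrite IHt1, IHt2, emap_F1; auto.
  - rewrite IHt, emap_F2; auto.
  - rewrite IHt, emap_F3; auto.
Qed.

Lemma qf_agree_vmap M N (f : embedding M N) (v : valuation M) V : qf_agree v (vmap f v) V.
Proof. intros s t1 t2 _ _. rewrite !teval_vmap. split; [congruence|apply emap_inj]. Qed.

Lemma Tstar_model_complete : model_complete Tstar.
Proof.
  intros M N f HM HN phi v.
  apply sat_transfer_fvars; auto using Tstar_T0, Tstar_model_rich, qf_agree_vmap.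
Qed.

Lemma Tstar_diagram_complete A M N (f : embedding A M) (g : embedding A N) :
  is_model Tstar M -> is_model Tstar N ->
  forall (phi : form) (v : valuation A), sat (vmap f v) phi <-> sat (vmap g v) phi.
Proof.
  intros HM HN phi v.
  apply sat_transfer_fvars; auto using Tstar_T0, Tstar_model_rich.
  apply qf_agree_incl with (V' := fvars phi); [|apply incl_refl].
  intros s t1 t2 _ _. rewrite !teval_vmap. split; intro E; apply emap_inj in E; congruence.
Qed.

(* An element not named by a term over [A] has, by richness, a conjugate
   outside any finite list. *)
Lemma Tstar_dcl_eq_acl : dcl_eq_acl Tstar.
Proof.
  intros M HMm A s0 b. pose proof (Tstar_T0 HMm) as HM. pose proof (Tstar_model_rich HMm) as RM.
  split; [|intros (phi & n & v & Hpar & Hb & Hu); exists phi, n, v; repeat split; auto;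
           exists [b]; intros c Hc; left; symmetry; apply Hu; auto].
  intros (phi & n & v & Hpar & Hb & l & Hl).
  set (V := filter (fun p => negb (sort_eqb (fst p) s0 && Nat.eqb (snd p) n)) (fvars phi)).
  assert (HV : forall s m, In (s, m) V <-> ffree s m phi = true /\ (s, m) <> (s0, n)).
  { intros s m. unfold V. rewrite filter_In, fvars_spec, negb_true_iff, var_eqb_false_iff. tauto. }
  destruct (classic (exists t, term_over V t /\ teval v t = b)) as [(t & Ht & Et)|Hno].
  - exists (fEq (tvar s0 n) t), n, v.
    assert (Hupd : forall c, teval (upd v s0 n c) t = teval v t)
      by (intro c; apply teval_ext; intros s m Hf; apply upd_other, HV, Ht, Hf).
    split; [|split].
    + intros s m Hf Hne. apply Hpar; auto. simpl in Hf. apply orb_true_iff in Hf as [Hf|Hf].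
      * apply tfree_tvar in Hf as [-> ->]; tauto.
      * apply HV, Ht, Hf.
    + simpl. rewrite upd_same, Hupd, Et. reflexivity.
    + intros c Hc. simpl in Hc. rewrite upd_same, Hupd, Et in Hc. exact Hc.
  - exfalso.
    destruct (RM M v v V s0 n b l HM (@qf_agree_refl M v V)) as (c & Hc & Hap);
      [intros t Ht E; apply Hno; eauto|].
    apply Hc, Hl. refine (proj1 (sat_transfer phi HM HM RM RM (V := (s0, n) :: V) _ Hap) Hb).
    intros s m Hf. destruct (classic ((s, m) = (s0, n))) as [E|E]; [left|right; apply HV]; auto.
Qed.

(** * The rich extension of a model of T0+ *)

Definition finite_set (P : nat -> Prop) := exists B : list nat, forall k, P k -> In k B.

Lemma finite_avoid P : finite_set P -> exists k, ~ P k.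
Proof.
  intros (B & HB). exists (S (list_max B)). intro H. apply HB in H.
  pose proof (proj1 (list_max_le B (list_max B)) (le_n _)) as Hle.
  rewrite Forall_forall in Hle. specialize (Hle _ H). lia.
Qed.

Lemma finite_or P Q : finite_set P -> finite_set Q -> finite_set (fun k => P k \/ Q k).
Proof. intros (B1 & H1) (B2 & H2). exists (B1 ++ B2). intros k [H|H]; apply in_app_iff; auto. Qed.

Lemma finite_preimage X (f : nat -> X) (L : list X) :
  (forall i j, f i = f j -> i = j) -> finite_set (fun k => In (f k) L).
Proof.
  intro Hf. induction L as [|y r (B & HB)]; [exists []; intros k []|].
  destruct (classic (exists i, f i = y)) as [(i & Hi)|Hn].
  - exists (i :: B). intros k [E|E]; [left; apply Hf; congruence|right; auto].
  - exists B. intros k [E|E]; auto. elim Hn; eauto.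
Qed.

Lemma finite_exists_in X (l : list X) (Q : X -> nat -> Prop) :
  (forall x, In x l -> finite_set (Q x)) -> finite_set (fun k => exists x, In x l /\ Q x k).
Proof.
  induction l as [|y r IH]; intro H; [exists []; intros k (x & [] & _)|].
  destruct (H y (or_introl eq_refl)) as (B1 & H1), IH as (B2 & H2); [intros; apply H; right; auto|].
  exists (B1 ++ B2). intros k (x & [<-|Hx] & Hq); apply in_app_iff; [left; auto|right; apply H2; eauto].
Qed.

Definition classic_eq_dec {X} (x y : X) : {x = y} + {x <> y} := excluded_middle_informative (x = y).

Section Extension.
Variable A : structure.

(* Besides the elements of [A] ([old0], [old1], [old2]), [Ext A] has:
   - [new0 Lab l0 P k]: a new point [b] of sort [S0] whose column [F1 z b]
     is [col1 b l] for the keys [z] of [Lab] with label [l], and [col1 b l0]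
     for [z = F2 b], and whose row [F1 (F2 b) c] follows [P];
   - [img2 c]: the point [F2 c] for a new [c];
   - [new2 c0 P k]: a new point [z] of sort [S2] with [F3 z = c0] and row
     [F1 z c] following [P];
   - [free1 z c]: the value of [F1 z c] when nothing is prescribed.
   The index [k] provides infinitely many copies of each new point. *)
Inductive ext0 : Type :=
  | old0 (x : car A S0) | new0 (Lab : labels) (l0 : nat) (P : prescr) (k : nat)
with ext2 : Type :=
  | old2 (z : car A S2) | img2 (c : ext0) | new2 (c0 : ext0) (P : prescr) (k : nat)
with ext1 : Type :=
  | old1 (y : car A S1) | col1 (c : ext0) (l : nat) | free1 (z : ext2) (c : ext0)
with labels : Type := lnil | lcons (z : ext2) (l : nat) (r : labels)
with prescr : Type := pnil | pcons (c : ext0) (y : ext1) (r : prescr).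

Fixpoint find_label (z : ext2) (l : labels) : option nat :=
  match l with
  | lnil => None
  | lcons z' k r => if classic_eq_dec z z' then Some k else find_label z r
  end.
Fixpoint find_presc (c : ext0) (p : prescr) : option ext1 :=
  match p with
  | pnil => None
  | pcons c' y r => if classic_eq_dec c c' then Some y else find_presc c r
  end.
Fixpoint label_keys (l : labels) : list ext2 :=
  match l with lnil => [] | lcons z _ r => z :: label_keys r end.

Definition xF0 (y : ext1) : ext0 :=
  match y with old1 y => old0 (fn0 A y) | col1 c _ => c | free1 _ c => c end.
Definition xF2 (c : ext0) : ext2 := match c with old0 x => old2 (fn2 A x) | _ => img2 c end.
Definition xF3 (z : ext2) : ext0 :=
  match z with old2 z => old0 (fn3 A z) | img2 c => c | new2 c0 _ _ => c0 end.
Definition row_presc (z : ext2) : prescr :=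
  match z with img2 (new0 _ _ P _) => P | new2 _ P _ => P | _ => pnil end.
Definition default_F1 (z : ext2) (c : ext0) : ext1 :=
  match find_presc c (row_presc z) with
  | Some y => if classic_eq_dec (xF0 y) c then y else free1 z c
  | None => free1 z c
  end.
Definition xF1 (z : ext2) (c : ext0) : ext1 :=
  match c with
  | old0 x => match z with old2 z => old1 (fn1 A z x) | _ => default_F1 z c end
  | new0 Lab l0 _ _ =>
      if classic_eq_dec z (img2 c) then col1 c l0 else
      match find_label z Lab with Some l => col1 c l | None => default_F1 z c end
  end.

Definition ext_car (s : sort) : Type := match s with S0 => ext0 | S1 => ext1 | S2 => ext2 end.
Definition ext_inh (s : sort) : ext_car s :=
  match s return ext_car s with
  | S0 => old0 (inh A S0) | S1 => old1 (inh A S1) | S2 => old2 (inh A S2)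
  end.

Definition Ext : structure :=
  {| car := ext_car; inh := ext_inh; fn0 := xF0; fn1 := xF1; fn2 := xF2; fn3 := xF3 |}.

Lemma xF0_default_F1 z c : xF0 (default_F1 z c) = c.
Proof.
  unfold default_F1. destruct (find_presc c (row_presc z)) as [y|]; auto.
  destruct (classic_eq_dec (xF0 y) c); auto.
Qed.

Lemma Ext_T0 : T0_axioms A -> T0_axioms Ext.
Proof.
  intros [H0 H3]. split; simpl.
  - intros z [x|Lab l0 P k].
    + destruct z; simpl; try apply xF0_default_F1. rewrite H0; auto.
    + simpl. destruct (classic_eq_dec z _); auto.
      destruct (find_label z Lab); auto. apply xF0_default_F1.
  - intros [x|Lab l0 P k]; simpl; auto. rewrite H3; auto.
Qed.

Fixpoint to_labels (l : list (ext2 * nat)) : labels :=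
  match l with [] => lnil | (z, k) :: r => lcons z k (to_labels r) end.
Fixpoint to_presc (l : list (ext0 * option ext1)) : prescr :=
  match l with
  | [] => pnil
  | (c, Some y) :: r => pcons c y (to_presc r)
  | (c, None) :: r => to_presc r
  end.

Lemma find_label_not_key z l : ~ In z (label_keys l) -> find_label z l = None.
Proof.
  induction l as [|z' k r IH]; simpl; auto. intro H.
  destruct (classic_eq_dec z z'); [subst; tauto|auto].
Qed.

Lemma find_label_to_labels z k Lab :
  In (z, k) Lab -> functional_list Lab -> find_label z (to_labels Lab) = Some k.
Proof.
  induction Lab as [|(z', k') r IH]; simpl; [tauto|]. intros Hi Hf.
  destruct (classic_eq_dec z z') as [E|E].
  - subst. f_equal. eapply Hf; [left; reflexivity|exact Hi].
  - destruct Hi as [E'|Hi]; [injection E'; congruence|]. apply IH; auto.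
    intros c o o' H1 H2; eapply Hf; right; eauto.
Qed.

Lemma find_presc_sound c y P : find_presc c (to_presc P) = Some y -> In (c, Some y) P.
Proof.
  induction P as [|(c', [y'|]) r IH]; simpl; [discriminate| |auto].
  destruct (classic_eq_dec c c') as [E|E]; [intro Ey; injection Ey; intros; subst; left|right]; auto.
Qed.

Lemma find_presc_complete c y P : In (c, Some y) P -> exists y', find_presc c (to_presc P) = Some y'.
Proof.
  induction P as [|(c', o') r IH]; simpl; [tauto|]. intros [E|Hi]; [injection E as -> ->|].
  - simpl. destruct (classic_eq_dec c c); [eauto|congruence].
  - destruct o' as [y'|]; simpl; auto. destruct (classic_eq_dec c c'); eauto.
Qed.

Lemma find_presc_to_presc c o P :
  In (c, o) P -> functional_list P -> find_presc c (to_presc P) = o.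
Proof.
  intros Hi Hf. destruct (find_presc c (to_presc P)) as [y|] eqn:E.
  - apply find_presc_sound in E. eapply Hf; eauto.
  - destruct o as [y|]; auto. destruct (find_presc_complete _ _ _ Hi) as (y' & E'). congruence.
Qed.

Definition keys_of (c : ext0) : list ext2 :=
  match c with new0 Lab _ _ _ => label_keys Lab | _ => [] end.

Lemma xF1_default z c : z <> img2 c -> ~ In z (keys_of c) ->
  (forall z0 x, z = old2 z0 -> c = old0 x -> False) -> xF1 z c = default_F1 z c.
Proof.
  intros H1 H2 H3. destruct c as [x|Lab l0 P k]; simpl.
  - destruct z; auto. elim (H3 z x); auto.
  - destruct (classic_eq_dec z _); [congruence|]. simpl in H2. rewrite find_label_not_key; auto.
Qed.

Lemma xF1_prescribed z c o P L1 :
  row_presc z = to_presc P -> functional_list P -> (forall c y, In (c, Some y) P -> xF0 y = c) ->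
  In (c, o) P -> xF1 z c = default_F1 z c -> ~ In (free1 z c) L1 ->
  prescribed (fn1 Ext z c) o L1.
Proof.
  intros Hz HPf HPv Hco Hd Hfree. simpl. rewrite Hd. unfold default_F1.
  rewrite Hz; erewrite find_presc_to_presc; [|exact Hco|exact HPf]. destruct o as [y|]; simpl; auto.
  destruct (classic_eq_dec (xF0 y) c) as [_|E]; auto. elim E. apply (HPv c y Hco).
Qed.

Lemma exists_fresh_copy X (g : nat -> X) (f : nat -> ext2) (L : list X)
  (P : list (ext0 * option ext1)) (L1 : list ext1) :
  (forall i j, g i = g j -> i = j) -> (forall i j, f i = f j -> i = j) ->
  exists k, ~ In (g k) L /\
    forall x, In x P -> ~ In (f k) (keys_of (fst x)) /\ ~ In (free1 (f k) (fst x)) L1.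
Proof.
  intros Hg Hf.
  assert (Hfin : finite_set (fun k => In (g k) L \/ (exists x, In x P /\ In (f k) (keys_of (fst x))) \/
                              (exists x, In x P /\ In (free1 (f k) (fst x)) L1))).
  { repeat apply finite_or; [apply finite_preimage, Hg| |];
      apply finite_exists_in; intros x _; apply finite_preimage;
      intros i j E; [|injection E as E]; apply Hf, E. }
  destruct (finite_avoid Hfin) as (k & Hk). exists k. split; [tauto|].
  intros x Hx; split; intro H; apply Hk; right; [left|right]; eauto.
Qed.

Lemma Ext_fibres_F0_infinite : fibres_F0_infinite Ext.
Proof.
  intros c L.
  destruct (finite_avoid (finite_preimage (fun k => col1 c k) L ltac:(intros i j E; injection E; auto)))
    as (k & Hk).
  exists (col1 c k). split; auto.
Qed.

Lemma Ext_S2_generic : S2_generic Ext.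
Proof.
  intros c0 L2 L1 P HPf HPv.
  destruct (@exists_fresh_copy _ (new2 c0 (to_presc P)) (new2 c0 (to_presc P)) L2 P L1)
    as (k & Hk & HP); try (intros i j E; injection E; auto).
  exists (new2 c0 (to_presc P) k). split; [reflexivity|]. split; [exact Hk|].
  intros c o Hco. destruct (HP _ Hco) as [Hkey Hfree].
  apply xF1_prescribed with P; auto. apply xF1_default; [discriminate|auto|discriminate].
Qed.

Lemma Ext_S0_generic : S0_generic Ext.
Proof.
  intros L0 L1 P Lab l0 HPf HPv HPk HLf HLk.
  set (b := fun k => new0 (to_labels Lab) l0 (to_presc P) k).
  destruct (@exists_fresh_copy _ b (fun k => img2 (b k)) L0 P L1) as (k & Hk & HP);
    try (intros i j E; injection E; auto).
  exists (b k). split; [exact Hk|]. split.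
  - intros c o Hco. destruct (HP _ Hco) as [Hkey Hfree].
    apply xF1_prescribed with P; auto. apply xF1_default; [|auto|discriminate].
    intro E; injection E as E. apply Hk. rewrite E. eapply HPk; eauto.
  - assert (Hval : forall z l, In (z, l) ((img2 (b k), l0) :: Lab) -> xF1 z (b k) = col1 (b k) l).
    { intros z l [E|Hi].
      - injection E as <- <-. simpl. destruct (classic_eq_dec (img2 (b k)) (img2 (b k))); congruence.
      - simpl. destruct (classic_eq_dec z (img2 (b k))) as [->|E].
        + elim Hk. exact (HLk _ _ Hi).
        + erewrite find_label_to_labels; eauto. }
    intros z l z' l' H1 H2. change (xF1 z (b k) = xF1 z' (b k) <-> l = l').
    rewrite (Hval _ _ H1), (Hval _ _ H2).
    split; [intros [= ->]|intros ->]; auto.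
Qed.

Lemma Ext_rich : T0_axioms A -> rich Ext.
Proof.
  intro HA.
  apply rich_of_generic; auto using Ext_T0, Ext_S0_generic, Ext_fibres_F0_infinite, Ext_S2_generic.
Qed.

Definition ext_emb_map s : car A s -> car Ext s :=
  match s return car A s -> ext_car s with S0 => old0 | S1 => old1 | S2 => old2 end.

Definition ext_emb : embedding A Ext.
Proof.
  refine {| emap := ext_emb_map |}; try reflexivity.
  intros [] x y E; injection E; auto.
Defined.
End Extension.

(** * A countable model *)

Section CountableOfInjections.
Variables (X : Type) (g : X -> nat) (f : nat -> X).
Hypotheses (Hg : forall x y, g x = g y -> x = y) (Hf : forall i j, f i = f j -> i = j).

(* [rank n] counts the elements of the range of [g] below [n]; restricted to
   that range it is a bijection onto [nat], since the range contains the
   infinite set [g (f i)]. *)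
Definition in_range (n : nat) : Prop := exists x, g x = n.
Fixpoint rank (n : nat) : nat :=
  match n with 0 => 0 | S n => rank n + (if decide (in_range n) then 1 else 0) end.

Lemma rank_mono m n : m <= n -> rank m <= rank n.
Proof. induction 1; simpl; lia. Qed.

Lemma rank_strict m n : in_range m -> m < n -> rank m < rank n.
Proof.
  intros Hm Hmn. assert (H : rank (S m) <= rank n) by (apply rank_mono; lia).
  simpl in H. rewrite (proj2 (decide_spec _) Hm) in H. lia.
Qed.

Lemma rank_inj m m' : in_range m -> in_range m' -> rank m = rank m' -> m = m'.
Proof.
  intros H1 H2 E. destruct (lt_eq_lt_dec m m') as [[Hl|Hl]|Hl]; auto.
  - pose proof (rank_strict H1 Hl); lia.
  - pose proof (rank_strict H2 Hl); lia.
Qed.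

Lemma range_unbounded n : exists m, n <= m /\ in_range m.
Proof.
  destruct (classic (exists i, n <= g (f i))) as [(i & Hi)|Hn];
    [exists (g (f i)); split; eauto; exists (f i); auto|].
  exfalso. assert (Hl : length (map (fun i => g (f i)) (seq 0 (S n))) <= length (seq 0 n)).
  { apply NoDup_incl_length.
    - apply NoDup_map_NoDup_ForallPairs; [intros i j _ _ E; apply Hf, Hg, E|apply seq_NoDup].
    - intros y Hy. apply in_map_iff in Hy as (i & <- & _). apply in_seq.
      assert (~ n <= g (f i)) by (intro; apply Hn; eauto). lia. }
  rewrite length_map, !length_seq in Hl. lia.
Qed.

Lemma rank_surj k : exists x, rank (g x) = k.
Proof.
  assert (Hup : forall j, exists n, j <= rank n).
  { induction j as [|j (n & Hn)]; [exists 0; lia|].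
    destruct (range_unbounded n) as (m & Hm & Hr). exists (S m). simpl.
    rewrite (proj2 (decide_spec _) Hr). pose proof (rank_mono Hm). lia. }
  destruct (Hup (S k)) as (n & Hn). induction n as [|n IH]; simpl in Hn; [lia|].
  destruct (le_lt_dec (S k) (rank n)) as [Hl|Hl]; auto.
  destruct (decide (in_range n)) eqn:E; [|lia].
  apply decide_true in E as (x & <-). exists x. lia.
Qed.

Lemma countably_infinite_of_injections : countably_infinite X.
Proof.
  exists (fun k => proj1_sig (constructive_indefinite_description _ (rank_surj k))),
    (fun x => rank (g x)).
  split.
  - intro k. destruct (constructive_indefinite_description _ _); auto.
  - intro x. destruct (constructive_indefinite_description _ _) as (x' & E). simpl.
    apply Hg, rank_inj; [exists x'|exists x|]; auto.
Qed.
End CountableOfInjections.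

Definition unit_structure : structure :=
  {| car := fun _ => unit; inh := fun _ => tt; fn0 := fun _ => tt; fn1 := fun _ _ => tt;
     fn2 := fun _ => tt; fn3 := fun _ => tt |}.

Lemma unit_structure_T0 : T0_axioms unit_structure.
Proof. split; intros; now destruct x. Qed.

Definition countable_model := Ext unit_structure.

Scheme ext0_ind' := Induction for ext0 Sort Prop
with ext2_ind' := Induction for ext2 Sort Prop
with ext1_ind' := Induction for ext1 Sort Prop
with labels_ind' := Induction for labels Sort Prop
with prescr_ind' := Induction for prescr Sort Prop.
Combined Scheme ext_mutind from ext0_ind', ext2_ind', ext1_ind', labels_ind', prescr_ind'.

Definition pair_code (a b : nat) : nat := to_nat (a, b).

Lemma pair_code_inj a b a' b' : pair_code a b = pair_code a' b' -> a = a' /\ b = b'.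
Proof.
  intro E. apply (f_equal of_nat) in E. unfold pair_code in E. rewrite !cancel_of_to in E.
  injection E; auto.
Qed.

Fixpoint code0 (e : ext0 unit_structure) : nat :=
  match e with
  | old0 _ _ => pair_code 0 0
  | new0 Lab l0 P k =>
      pair_code 1 (pair_code (code_labels Lab) (pair_code l0 (pair_code (code_presc P) k)))
  end
with code2 (z : ext2 unit_structure) : nat :=
  match z with
  | old2 _ _ => pair_code 0 0
  | img2 c => pair_code 1 (code0 c)
  | new2 c0 P k => pair_code 2 (pair_code (code0 c0) (pair_code (code_presc P) k))
  end
with code1 (y : ext1 unit_structure) : nat :=
  match y with
  | old1 _ _ => pair_code 0 0
  | col1 c l => pair_code 1 (pair_code (code0 c) l)
  | free1 z c => pair_code 2 (pair_code (code2 z) (code0 c))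
  end
with code_labels (l : labels unit_structure) : nat :=
  match l with
  | lnil _ => pair_code 0 0
  | lcons z k r => pair_code 1 (pair_code (code2 z) (pair_code k (code_labels r)))
  end
with code_presc (p : prescr unit_structure) : nat :=
  match p with
  | pnil _ => pair_code 0 0
  | pcons c y r => pair_code 1 (pair_code (code0 c) (pair_code (code1 y) (code_presc r)))
  end.

Lemma codes_inj :
  (forall e e', code0 e = code0 e' -> e = e') /\
  (forall e e', code2 e = code2 e' -> e = e') /\
  (forall e e', code1 e = code1 e' -> e = e') /\
  (forall e e', code_labels e = code_labels e' -> e = e') /\
  (forall e e', code_presc e = code_presc e' -> e = e').
Proof.
  apply ext_mutind; intros; match goal with |- _ = ?e' => destruct e' end; simpl in *;
    repeat match goal with
           | H : pair_code _ _ = pair_code _ _ |- _ => apply pair_code_inj in H as [? ?]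
           end;
    try discriminate; try (f_equal; auto; fail);
    try (match goal with |- ?f ?a = ?f ?b => destruct a, b; reflexivity end).
Qed.

Definition sort_code (s : sort) : nat := match s with S0 => 0 | S1 => 1 | S2 => 2 end.
Definition code (s : sort) : car countable_model s -> nat :=
  match s return car countable_model s -> nat with S0 => code0 | S1 => code1 | S2 => code2 end.

Lemma countable_model_countable : countably_infinite (universe countable_model).
Proof.
  apply countably_infinite_of_injections with
    (g := fun u => pair_code (sort_code (projT1 u)) (code (projT1 u) (projT2 u)))
    (f := fun n => existT _ S1 (col1 (old0 unit_structure tt) n)).
  - intros [s x] [s' x'] E. simpl in E. apply pair_code_inj in E as [Es Ex].
    destruct s, s'; try discriminate; simpl in *; f_equal; apply codes_inj; auto.
  - intros i j E. apply inj_pair2_eq_dec in E; [injection E; auto|exact sort_eq_dec].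
Qed.

(** * Back and forth *)

Section BackAndForth.
Variables (M N : structure).
Hypotheses (HM : T0_axioms M) (HN : T0_axioms N) (RM : rich M) (RN : rich N).

Definition entry := {s : sort & (car M s * car N s)%type}.

Definition left_val (l : list entry) : valuation M := fun s i =>
  match nth_error l i with
  | Some (existT _ s' (a, _)) =>
      match sort_eq_dec s' s with left e => eq_rect s' (car M) a s e | right _ => inh M s end
  | None => inh M s
  end.
Definition right_val (l : list entry) : valuation N := fun s i =>
  match nth_error l i with
  | Some (existT _ s' (_, b)) =>
      match sort_eq_dec s' s with left e => eq_rect s' (car N) b s e | right _ => inh N s end
  | None => inh N s
  end.

Fixpoint entry_vars_from (k : nat) (l : list entry) : list (sort * nat) :=
  match l with [] => [] | p :: r => (projT1 p, k) :: entry_vars_from (S k) r end.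
Definition entry_vars := entry_vars_from 0.

Lemma entry_vars_from_app k l p :
  entry_vars_from k (l ++ [p]) = entry_vars_from k l ++ [(projT1 p, k + length l)].
Proof.
  revert k; induction l as [|q r IH]; intro k; simpl; [rewrite Nat.add_0_r; reflexivity|].
  rewrite IH, Nat.add_succ_r. reflexivity.
Qed.

Lemma entry_vars_app l p : entry_vars (l ++ [p]) = entry_vars l ++ [(projT1 p, length l)].
Proof. apply entry_vars_from_app. Qed.

Lemma in_entry_vars l i s a b : nth_error l i = Some (existT _ s (a, b)) -> In (s, i) (entry_vars l).
Proof.
  unfold entry_vars. replace i with (i + 0) at 2 by lia. generalize 0. revert i.
  induction l as [|q r IH]; intros i k H; [destruct i; discriminate|].
  destruct i; simpl in H.
  - injection H as Hq. subst q. left; auto.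
  - simpl. right. replace (S (i + k)) with (i + S k) by lia. apply IH; auto.
Qed.

Lemma left_val_nth l i s a b : nth_error l i = Some (existT _ s (a, b)) -> left_val l s i = a.
Proof. intro H. unfold left_val, entry in *. rewrite H, sort_eq_dec_refl. reflexivity. Qed.
Lemma right_val_nth l i s a b : nth_error l i = Some (existT _ s (a, b)) -> right_val l s i = b.
Proof. intro H. unfold right_val, entry in *. rewrite H, sort_eq_dec_refl. reflexivity. Qed.

Lemma nth_error_snoc X (l : list X) x i :
  nth_error (l ++ [x]) i = if i <? length l then nth_error l i
                           else if i =? length l then Some x else None.
Proof.
  destruct (Nat.ltb_spec i (length l)); [apply nth_error_app1; auto|].
  rewrite nth_error_app2 by lia. destruct (Nat.eqb_spec i (length l)) as [->|E].
  - rewrite Nat.sub_diag. reflexivity.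
  - apply nth_error_None. simpl. lia.
Qed.

Lemma left_val_snoc l s a b : left_val (l ++ [existT _ s (a, b)]) = upd (left_val l) s (length l) a.
Proof.
  apply functional_extensionality_dep; intro s'; apply functional_extensionality; intro i.
  unfold left_val at 1. rewrite nth_error_snoc.
  destruct (Nat.ltb_spec i (length l)); [rewrite upd_other by (intros [=]; lia); reflexivity|].
  destruct (Nat.eqb_spec i (length l)) as [->|E].
  - destruct (sort_eq_dec s s') as [<-|E]; [rewrite upd_same; reflexivity|].
    rewrite upd_other by congruence. unfold left_val. rewrite (proj2 (nth_error_None _ _)); auto.
  - rewrite upd_other by congruence. unfold left_val. rewrite (proj2 (nth_error_None _ _)); auto; lia.
Qed.
Lemma right_val_snoc l s a b : right_val (l ++ [existT _ s (a, b)]) = upd (right_val l) s (length l) b.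
Proof.
  apply functional_extensionality_dep; intro s'; apply functional_extensionality; intro i.
  unfold right_val at 1. rewrite nth_error_snoc.
  destruct (Nat.ltb_spec i (length l)); [rewrite upd_other by (intros [=]; lia); reflexivity|].
  destruct (Nat.eqb_spec i (length l)) as [->|E].
  - destruct (sort_eq_dec s s') as [<-|E]; [rewrite upd_same; reflexivity|].
    rewrite upd_other by congruence. unfold right_val. rewrite (proj2 (nth_error_None _ _)); auto.
  - rewrite upd_other by congruence. unfold right_val. rewrite (proj2 (nth_error_None _ _)); auto; lia.
Qed.

Definition partial_iso (l : list entry) := qf_agree (left_val l) (right_val l) (entry_vars l).

Lemma partial_iso_snoc l s a b :
  qf_agree (upd (left_val l) s (length l) a) (upd (right_val l) s (length l) b)
           ((s, length l) :: entry_vars l) ->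
  partial_iso (l ++ [existT _ s (a, b)]).
Proof.
  intro H. unfold partial_iso. rewrite left_val_snoc, right_val_snoc, entry_vars_app.
  eapply qf_agree_incl; [exact H|].
  intros p Hp. apply in_app_iff in Hp as [Hp|[<-|[]]]; [right|left]; auto.
Qed.

Lemma forth l s (a : car M s) : partial_iso l -> exists b, partial_iso (l ++ [existT _ s (a, b)]).
Proof.
  intro H. destruct (rich_extend RN s (length l) a HM H) as (b & Hb).
  exists b. apply partial_iso_snoc; auto.
Qed.

Lemma back l s (b : car N s) : partial_iso l -> exists a, partial_iso (l ++ [existT _ s (a, b)]).
Proof.
  intro H. destruct (rich_extend RM s (length l) b HN (qf_agree_sym H)) as (a & Ha).
  exists a. apply partial_iso_snoc, qf_agree_sym; auto.
Qed.

Lemma partial_iso_nil : partial_iso [].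
Proof. apply qf_agree_nil. Qed.

Definition forth_step (l : {l | partial_iso l}) (x : universe M) : {l | partial_iso l} :=
  let b := constructive_indefinite_description _ (@forth (proj1_sig l) _ (projT2 x) (proj2_sig l)) in
  exist _ (proj1_sig l ++ [existT _ (projT1 x) (projT2 x, proj1_sig b)]) (proj2_sig b).
Definition back_step (l : {l | partial_iso l}) (y : universe N) : {l | partial_iso l} :=
  let a := constructive_indefinite_description _ (@back (proj1_sig l) _ (projT2 y) (proj2_sig l)) in
  exist _ (proj1_sig l ++ [existT _ (projT1 y) (proj1_sig a, projT2 y)]) (proj2_sig a).

Variables (fM : nat -> universe M) (fN : nat -> universe N)
  (gM : universe M -> nat) (gN : universe N -> nat).
Hypotheses (HfgM : forall x, fM (gM x) = x) (HfgN : forall y, fN (gN y) = y).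

Fixpoint stage (k : nat) : {l | partial_iso l} :=
  match k with
  | 0 => exist _ [] partial_iso_nil
  | S k => back_step (forth_step (stage k) (fM k)) (fN k)
  end.
Definition chain k := proj1_sig (stage k).

Lemma chain_S k : exists b a, chain (S k) = chain k ++
  [existT _ (projT1 (fM k)) (projT2 (fM k), b); existT _ (projT1 (fN k)) (a, projT2 (fN k))].
Proof.
  unfold chain; simpl; unfold back_step, forth_step; simpl.
  rewrite <- app_assoc. do 2 eexists. reflexivity.
Qed.

Lemma chain_length k : length (chain k) = 2 * k.
Proof.
  induction k as [|k IH]; [reflexivity|]. destruct (chain_S k) as (b & a & ->).
  rewrite length_app, IH. simpl. lia.
Qed.

Lemma chain_prefix k k' : k <= k' -> exists r, chain k' = chain k ++ r.
Proof.
  induction 1 as [|k' _ (r & Hr)]; [exists []; rewrite app_nil_r; auto|].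
  destruct (chain_S k') as (b & a & ->). rewrite Hr, <- app_assoc. eauto.
Qed.

Definition appears s (a : car M s) (b : car N s) :=
  exists k i, nth_error (chain k) i = Some (existT _ s (a, b)).

Lemma nth_chain_mono k k' i p :
  nth_error (chain k) i = Some p -> k <= k' -> nth_error (chain k') i = Some p.
Proof.
  intros H Hk. destruct (chain_prefix Hk) as (r & ->).
  rewrite nth_error_app1; auto. apply nth_error_Some. congruence.
Qed.

Lemma chain_S_left k :
  exists b, nth_error (chain (S k)) (2 * k) = Some (existT _ (projT1 (fM k)) (projT2 (fM k), b)).
Proof.
  destruct (chain_S k) as (b & a & ->). exists b.
  rewrite nth_error_app2, chain_length, Nat.sub_diag by (rewrite chain_length; lia). reflexivity.
Qed.

Lemma chain_S_right k :
  exists a, nth_error (chain (S k)) (S (2 * k)) = Some (existT _ (projT1 (fN k)) (a, projT2 (fN k))).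
Proof.
  destruct (chain_S k) as (b & a & ->). exists a.
  rewrite nth_error_app2, chain_length by (rewrite chain_length; lia).
  replace (S (2 * k) - 2 * k) with 1 by lia. reflexivity.
Qed.

Lemma appears_left s a : exists b, appears s a b.
Proof.
  pose proof (chain_S_left (gM (existT _ s a))) as H. rewrite HfgM in H.
  destruct H as (b & Hb). exists b; do 2 eexists. exact Hb.
Qed.

Lemma appears_right s b : exists a, appears s a b.
Proof.
  pose proof (chain_S_right (gN (existT _ s b))) as H. rewrite HfgN in H.
  destruct H as (a & Ha). exists a; do 2 eexists. exact Ha.
Qed.

Lemma appears_eventually s a b : appears s a b ->
  exists k0, forall k, k0 <= k -> exists i, nth_error (chain k) i = Some (existT _ s (a, b)).
Proof. intros (k0 & i & H). exists k0. intros k Hk. exists i. eapply nth_chain_mono; eauto. Qed.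

Lemma chain_partial_iso k : partial_iso (chain k).
Proof. exact (proj2_sig (stage k)). Qed.

Lemma term_over_entry l i s a b :
  nth_error l i = Some (existT _ s (a, b)) -> term_over (entry_vars l) (tvar s i).
Proof. intro H. apply term_over_tvar. eapply in_entry_vars; eauto. Qed.

Lemma appears_inj s a b a' b' : appears s a b -> appears s a' b' -> (a = a' <-> b = b').
Proof.
  intros H1 H2. destruct (appears_eventually H1) as (k1 & E1), (appears_eventually H2) as (k2 & E2).
  destruct (E1 (max k1 k2)) as (i & Hi), (E2 (max k1 k2)) as (j & Hj); try lia.
  pose proof (@chain_partial_iso (max k1 k2) s (tvar s i) (tvar s j)) as H. simpl in H.
  erewrite !left_val_nth, !right_val_nth in H by eassumption.
  apply H; eapply term_over_entry; eauto.
Qed.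

Definition bf_map s (a : car M s) : car N s :=
  proj1_sig (constructive_indefinite_description _ (appears_left s a)).

Lemma bf_map_appears s a : appears s a (bf_map s a).
Proof. unfold bf_map. destruct (constructive_indefinite_description _ _); auto. Qed.

Lemma bf_map_F0 y : bf_map S0 (fn0 M y) = fn0 N (bf_map S1 y).
Proof.
  destruct (appears_eventually (bf_map_appears S1 y)) as (k1 & E1),
    (appears_eventually (bf_map_appears S0 (fn0 M y))) as (k2 & E2).
  destruct (E1 (max k1 k2)) as (i & Hi), (E2 (max k1 k2)) as (j & Hj); try lia.
  pose proof (@chain_partial_iso (max k1 k2) S0 (tF0 (tvar S1 i)) (tvar S0 j)) as H. simpl in H.
  erewrite !left_val_nth, !right_val_nth in H by eassumption.
  symmetry; apply H; eauto using term_over_F0, term_over_entry.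
Qed.

Lemma bf_map_F1 z x : bf_map S1 (fn1 M z x) = fn1 N (bf_map S2 z) (bf_map S0 x).
Proof.
  destruct (appears_eventually (bf_map_appears S2 z)) as (k1 & E1),
    (appears_eventually (bf_map_appears S0 x)) as (k2 & E2),
    (appears_eventually (bf_map_appears S1 (fn1 M z x))) as (k3 & E3).
  set (k := max k1 (max k2 k3)).
  destruct (E1 k) as (i & Hi), (E2 k) as (j & Hj), (E3 k) as (l & Hl); try lia.
  pose proof (@chain_partial_iso k S1 (tF1 (tvar S2 i) (tvar S0 j)) (tvar S1 l)) as H. simpl in H.
  erewrite !left_val_nth, !right_val_nth in H by eassumption.
  symmetry; apply H; eauto using term_over_F1, term_over_entry.
Qed.

Lemma bf_map_F2 x : bf_map S2 (fn2 M x) = fn2 N (bf_map S0 x).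
Proof.
  destruct (appears_eventually (bf_map_appears S0 x)) as (k1 & E1),
    (appears_eventually (bf_map_appears S2 (fn2 M x))) as (k2 & E2).
  destruct (E1 (max k1 k2)) as (i & Hi), (E2 (max k1 k2)) as (j & Hj); try lia.
  pose proof (@chain_partial_iso (max k1 k2) S2 (tF2 (tvar S0 i)) (tvar S2 j)) as H. simpl in H.
  erewrite !left_val_nth, !right_val_nth in H by eassumption.
  symmetry; apply H; eauto using term_over_F2, term_over_entry.
Qed.

Lemma bf_map_F3 z : bf_map S0 (fn3 M z) = fn3 N (bf_map S2 z).
Proof.
  destruct (appears_eventually (bf_map_appears S2 z)) as (k1 & E1),
    (appears_eventually (bf_map_appears S0 (fn3 M z))) as (k2 & E2).
  destruct (E1 (max k1 k2)) as (i & Hi), (E2 (max k1 k2)) as (j & Hj); try lia.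
  pose proof (@chain_partial_iso (max k1 k2) S0 (tF3 (tvar S2 i)) (tvar S0 j)) as H. simpl in H.
  erewrite !left_val_nth, !right_val_nth in H by eassumption.
  symmetry; apply H; eauto using term_over_F3, term_over_entry.
Qed.

Definition bf_iso : embedding M N.
Proof.
  refine {| emap := bf_map; emap_F0 := bf_map_F0; emap_F1 := bf_map_F1;
            emap_F2 := bf_map_F2; emap_F3 := bf_map_F3 |}.
  intros s a a' E. apply (appears_inj (bf_map_appears s a) (bf_map_appears s a')), E.
Defined.

Lemma back_and_forth : exists f : embedding M N, isomorphism f.
Proof.
  exists bf_iso. intros s b. destruct (appears_right s b) as (a & Ha). exists a. simpl.
  apply (appears_inj (bf_map_appears s a) Ha). reflexivity.
Qed.
End BackAndForth.

Lemma countable_model_Tstar : is_model Tstar countable_model.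
Proof. apply is_model_Tstar_of_rich; [apply Ext_T0|apply Ext_rich]; apply unit_structure_T0. Qed.

Lemma Tstar_model_completion : model_completion T0plus Tstar.
Proof.
  split; [intros M HM; apply is_model_T0plus, Tstar_T0, HM|].
  split; [|split; [exact Tstar_model_complete|intros A M N f g _; apply Tstar_diagram_complete]].
  intros A HA. apply is_model_T0plus in HA. exists (Ext A). split.
  - apply is_model_Tstar_of_rich; [apply Ext_T0|apply Ext_rich]; exact HA.
  - constructor. exact (ext_emb A).
Qed.

Lemma Tstar_complete : complete Tstar.
Proof. split; [exists countable_model; exact countable_model_Tstar|exact Tstar_models_agree]. Qed.

Lemma Tstar_aleph0_categorical : aleph0_categorical Tstar.
Proof.
  split; [exists countable_model; split; [exact countable_model_Tstar|exact countable_model_countable]|].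
  intros M N HM HN (fM & gM & _ & HfgM) (fN & gN & _ & HfgN).
  exact (back_and_forth (Tstar_T0 HM) (Tstar_T0 HN) (Tstar_model_rich HM) (Tstar_model_rich HN)
           fM fN gM gN HfgM HfgN).
Qed.

Theorem claim2p5 :
  exists Tstar : theory,
    (forall phi, Tstar phi -> sentence phi) /\
    model_completion T0plus Tstar /\
    complete Tstar /\
    quantifier_elimination Tstar /\
    aleph0_categorical Tstar /\
    dcl_eq_acl Tstar.
Proof.
  exists Tstar.
  exact (conj Tstar_sentence (conj Tstar_model_completion (conj Tstar_complete
           (conj Tstar_QE (conj Tstar_aleph0_categorical Tstar_dcl_eq_acl))))).
Qed.
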